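(* Let $a,b\ge1$ be coprime with $a\le b$, let $A_{ij}$ denote the coefficient of $u^iv^jw^{a+b-1-i-j}$ in $P_{a/b}(u,v,w)$, with $A_{ij}=0$ for pairs not corresponding to a monomial of $P_{a/b}$, and let $\Delta_{a/b}=\{(i,j)\in\mathbb{R}^2: i,j\ge0,\ \frac ia+\frac jb\ge1,\ i+j\le a+b-1\}$. Then the coefficients on the line $j=1$ and on the line $i+j=a+b-2$ are strictly log-concave: for every lattice point $(i,1)\in\Delta_{a/b}$, $A_{i,1}^2>A_{i-1,1}A_{i+1,1}$; and for every lattice point $(i,j)\in\Delta_{a/b}$ with $i+j=a+b-2$, $A_{i,j}^2>A_{i-1,j+1}A_{i+1,j-1}$.
   Context: Markov polynomials. Let $x,y,z$ be indeterminates. Consider the set consisting of all rationals $\rho\in[0,1]$, each written in lowest terms $\rho=a/b$ with integers $a\ge 0$, $b\ge 1$, together with the formal symbol $1/0$. Define Laurent polynomials $M_\rho(x,y,z)$ recursively by $M_{1/0}=y$, $M_{0/1}=x$, $M_{1/1}=\frac{x^2+y^2}{z}$, and: whenever $a/b$, $c/d$ are in this set with $|ad-bc|=1$ and $(a+2c)/(b+2d)\in[0,1]$, then $M_{\frac{a+2c}{b+2d}}=\big(M_{c/d}^2+M_{\frac{a+c}{b+d}}^2\big)/M_{a/b}$. This determines $M_\rho$ for every rational $\rho\in[0,1]$. Numerator. For coprime $1\le a\le b$, $P_{a/b}(u,v,w)$ denotes the homogeneous polynomial of degree $a+b-1$ such that $M_{a/b}(x,y,z)=P_{a/b}(x^2,y^2,z^2)/(x^{a-1}y^{b-1}z^{a+b-1})$;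 its existence is known. *)

From HB Require Import structures.
From mathcomp Require Import all_boot all_order all_algebra.
From mathcomp Require Import fraction.
From mathcomp Require Import mpoly.
Set Implicit Arguments. Unset Strict Implicit. Unset Printing Implicit Defensive.
Import Order.TTheory GRing.Theory Num.Theory.
Local Open Scope ring_scope.

(* Polynomials in three variables u, v, w (= 'X_0, 'X_1, 'X_2) over Z. *)
Definition mpZ3 := {mpoly int[3]}.

(* The field Q(x,y,z) of rational functions (fraction field of Z[x,y,z]),
   where the Laurent polynomials M_rho live. *)
Definition RF := {fraction mpZ3}.
Definition toRF (p : mpZ3) : RF := @FracField.tofrac mpZ3 p.

Definition xF : RF := toRF 'X_0.
Definition yF : RF := toRF 'X_1.
Definition zF : RF := toRF 'X_2.

(* Index set: a fraction a/b in [0,1] in lowest terms (b >= 1), or 1/0.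
   A pair (a,b) of naturals stands for the fraction a/b. *)
Definition in_index (a b : nat) : bool :=
  coprime a b && ((a <= b)%N || (b == 0)%N).

Definition farey_nb (a b c d : nat) : bool :=
  ((a * d == b * c + 1) || (b * c == a * d + 1))%N.

(* M : nat -> nat -> RF (M a b = M_{a/b}) satisfies the defining recursion
   of the Markov polynomials. *)
Definition is_markov_family (M : nat -> nat -> RF) : Prop :=
  [/\ M 1%N 0%N = yF, M 0%N 1%N = xF, M 1%N 1%N = (xF ^+ 2 + yF ^+ 2) / zF &
      forall a b c d : nat,
        in_index a b -> in_index c d -> farey_nb a b c d ->
        (a + 2 * c <= b + 2 * d)%N ->
        M (a + 2 * c)%N (b + 2 * d)%N
          = (M c d ^+ 2 + M (a + c)%N (b + d)%N ^+ 2) / M a b].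

Definition sq_subst (P : mpZ3) : RF :=
  toRF (P \mPo [tuple ('X_0 : mpZ3) ^+ 2; ('X_1 : mpZ3) ^+ 2; ('X_2 : mpZ3) ^+ 2]).

Definition coefA (n : nat) (P : mpZ3) (i j : int) : int :=
  if (0 <= i) && (0 <= j) && (i + j <= n%:Z) then
    P@_[multinom [tuple `|i|%N; `|j|%N; (n - `|i| - `|j|)%N]]
  else 0.

Definition in_Delta (a b : nat) (i j : int) : bool :=
  [&& 0 <= i, 0 <= j, 1 <= (i%:~R / a%:R + j%:~R / b%:R : rat)
    & i + j <= (a + b)%:Z - 1].

From HB Require Import structures.
From mathcomp Require Import all_boot all_order all_algebra.
From mathcomp Require Import fraction.
From mathcomp Require Import mpoly.
From mathcomp Require Import ring.
From mathcomp Require Import zify.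
Set Implicit Arguments. Unset Strict Implicit. Unset Printing Implicit Defensive.
Import Order.TTheory GRing.Theory Num.Theory.
Local Open Scope ring_scope.

(* Write n = a+b-1, S = x^2+y^2, T = x^2+z^2.  One shows by induction along the
   Farey recursion that M_{p/q} has second-order expansions at z = 0 and at
   y = 0:  M_{p/q} z^n x^(p-1) y^(q-1) / S^n = 1 + z^2 ez + O(z^4)  and
   M_{p/q} y^(q-1) z^n / (x^(p+1) T^(q-1)) = 1 + y^2 fy + O(y^4), with ez, fy
   explicit rational functions.  These normalizations are multiplicative and
   ez, fy are affine along Farey triples, so the recursion
   M_T M_A = M_C^2 + M_m^2 propagates the expansions (the M_C^2 term being of
   higher order, except in two degenerate families treated separately).
   Comparing coefficients then gives P_{a/b} modulo w^2 and modulo v^2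
   explicitly: the coefficients on both lines have the form
   be C(N, k-1) + al C(N, k), i.e. a binomial coefficient times an affine
   function of k, which is strictly log-concave. *)

Ltac field_nz := field; rewrite ?oner_neq0 ?andbT ?andTb;
  repeat (apply/andP; split); try (by rewrite ?expf_neq0 ?mulf_neq0 ?invr_neq0).

Lemma toRFD p q : toRF (p + q) = toRF p + toRF q. Proof. exact: rmorphD. Qed.
Lemma toRFB p q : toRF (p - q) = toRF p - toRF q. Proof. exact: rmorphB. Qed.
Lemma toRFN p : toRF (- p) = - toRF p. Proof. exact: rmorphN. Qed.
Lemma toRFM p q : toRF (p * q) = toRF p * toRF q. Proof. exact: rmorphM. Qed.
Lemma toRFX p k : toRF (p ^+ k) = toRF p ^+ k. Proof. exact: rmorphXn. Qed.
Lemma toRF0 : toRF 0 = 0. Proof. exact: rmorph0. Qed.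
Lemma toRF1 : toRF 1 = 1. Proof. exact: rmorph1. Qed.

Lemma toRF_inj p q : toRF p = toRF q -> p = q.
Proof. by move/eqP; rewrite /toRF tofrac_eq => /eqP. Qed.

Lemma toRF_eq0 p : (toRF p == 0) = (p == 0).
Proof. by rewrite /toRF tofrac_eq0. Qed.

Lemma mpoly_neq0 (p : mpZ3) v : meval v p != 0 -> p != 0.
Proof. by apply: contraNneq => ->; rewrite meval0. Qed.

Lemma mpolyXU_neq0 i : ('X_i : mpZ3) != 0.
Proof. by apply: (@mpoly_neq0 _ (fun _ => 1)); rewrite mevalXU. Qed.

Definition ev0 (i : 'I_3) (q : mpZ3) : mpZ3 :=
  q \mPo [tuple (if j == i then 0 else 'X_j) | j < 3].

Lemma ev0D i p q : ev0 i (p + q) = ev0 i p + ev0 i q. Proof. exact: rmorphD. Qed.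
Lemma ev0M i p q : ev0 i (p * q) = ev0 i p * ev0 i q. Proof. exact: rmorphM. Qed.
Lemma ev0X i p k : ev0 i (p ^+ k) = ev0 i p ^+ k. Proof. exact: rmorphXn. Qed.
Lemma ev01 i : ev0 i 1 = 1. Proof. exact: rmorph1. Qed.

Lemma ev0_Xi i : ev0 i 'X_i = 0.
Proof. by rewrite /ev0 comp_mpolyXU -tnth_nth tnth_mktuple eqxx. Qed.

Lemma ev0_X i j : j != i -> ev0 i 'X_j = 'X_j.
Proof. by move=> ji; rewrite /ev0 comp_mpolyXU -tnth_nth tnth_mktuple (negbTE ji). Qed.

Lemma ev0_neq0 i q : ev0 i q != 0 -> q != 0.
Proof. by apply: contraNneq => ->; rewrite /ev0 raddf0. Qed.

Lemma toRF_ev0_neq0 i q : ev0 i q != 0 -> toRF q != 0.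
Proof. by move/ev0_neq0; rewrite toRF_eq0. Qed.

(* [vanishes i k f]: f = X_i^k p / q with q not divisible by X_i, i.e. f is
   O(X_i^k) in the local ring of Z[x,y,z] along X_i = 0. *)
Definition vanishes (i : 'I_3) (k : nat) (f : RF) :=
  exists p q : mpZ3, ev0 i q != 0 /\ f * toRF q = toRF ('X_i ^+ k * p).

Section Vanishing.
Variable i : 'I_3.

Lemma vanishesD k f g : vanishes i k f -> vanishes i k g -> vanishes i k (f + g).
Proof.
move=> [p1 [q1 [h1 e1]]] [p2 [q2 [h2 e2]]].
exists (p1 * q2 + p2 * q1), (q1 * q2); split; first by rewrite ev0M mulf_neq0.
rewrite toRFM mulrDl (mulrA f) e1 (mulrC (toRF q1)) mulrA e2.
by rewrite -!toRFM -toRFD; congr toRF; ring.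
Qed.

Lemma vanishesN k f : vanishes i k f -> vanishes i k (- f).
Proof.
move=> [p [q [h e]]]; exists (- p), q; split => //.
by rewrite mulNr e -toRFN; congr toRF; ring.
Qed.

Lemma vanishesB k f g : vanishes i k f -> vanishes i k g -> vanishes i k (f - g).
Proof. by move=> hf hg; apply/vanishesD/vanishesN. Qed.

Lemma vanishesM k l f g : vanishes i k f -> vanishes i l g -> vanishes i (k + l) (f * g).
Proof.
move=> [p1 [q1 [h1 e1]]] [p2 [q2 [h2 e2]]].
exists (p1 * p2), (q1 * q2); split; first by rewrite ev0M mulf_neq0.
by rewrite toRFM mulrACA e1 e2 -toRFM; congr toRF; rewrite exprD; ring.
Qed.

Lemma vanishesW k l f : (l <= k)%N -> vanishes i k f -> vanishes i l f.
Proof.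
move=> lk [p [q [h e]]]; exists ('X_i ^+ (k - l) * p), q; split => //.
by rewrite e mulrA -exprD subnKC.
Qed.

Lemma vanishesMW k l m f g :
  vanishes i k f -> vanishes i l g -> (m <= k + l)%N -> vanishes i m (f * g).
Proof. by move=> hf hg hm; apply: (vanishesW hm); apply: vanishesM. Qed.

Lemma vanishesX k f n : vanishes i k f -> vanishes i (k * n) (f ^+ n).
Proof.
move=> h; elim: n => [|n IH].
  by rewrite muln0 expr0; exists 1, 1; rewrite ev01 oner_neq0 mulr1 mul1r.
by rewrite exprS mulnS; apply: vanishesM.
Qed.

Lemma vanishesXW k f n m : vanishes i k f -> (m <= k * n)%N -> vanishes i m (f ^+ n).
Proof. by move=> h hm; apply: (vanishesW hm); apply: vanishesX. Qed.

Lemma vanishes0X f n : vanishes i 0 f -> vanishes i 0 (f ^+ n).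
Proof. by move=> h; apply: (vanishesXW h). Qed.

Lemma vanishes0XV f n : vanishes i 0 f^-1 -> vanishes i 0 (f ^+ n)^-1.
Proof. by move=> h; rewrite -exprVn; apply: vanishes0X. Qed.

Lemma vanishes_poly p : vanishes i 0 (toRF p).
Proof. by exists p, 1; rewrite ev01 oner_neq0 toRF1 mulr1 expr0 mul1r. Qed.

Lemma vanishes_Xn k : vanishes i k (toRF 'X_i ^+ k).
Proof. by exists 1, 1; rewrite ev01 oner_neq0 toRF1 !mulr1 toRFX. Qed.

Lemma vanishes0 k : vanishes i k 0.
Proof. by exists 0, 1; rewrite ev01 oner_neq0 mul0r mulr0 toRF0. Qed.

Lemma vanishes1 : vanishes i 0 1.
Proof. by rewrite -toRF1; apply: vanishes_poly. Qed.

Lemma vanishes_nat n : vanishes i 0 n%:R.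
Proof. by have := vanishes_poly n%:R; rewrite /toRF rmorph_nat. Qed.

Lemma vanishes_polyV p : ev0 i p != 0 -> vanishes i 0 (toRF p)^-1.
Proof.
move=> h; exists 1, p; split => //.
by rewrite mulVf ?(toRF_ev0_neq0 h) // mulr1 expr0 toRF1.
Qed.

Lemma vanishes_inv1D g : vanishes i 1 g -> 1 + g != 0 /\ vanishes i 0 (1 + g)^-1.
Proof.
move=> [p [q [h e]]].
have hs : ev0 i (q + 'X_i * p) != 0 by rewrite ev0D ev0M ev0_Xi mul0r addr0.
have e1 : (1 + g) * toRF q = toRF (q + 'X_i * p).
  by rewrite mulrDl mul1r e toRFD expr1.
have nz : 1 + g != 0.
  apply: contraTneq (toRF_ev0_neq0 hs) => h0.
  by rewrite -e1 h0 mul0r eqxx.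
split=> //; exists q, (q + 'X_i * p); split => //.
by rewrite -e1 mulrA mulVf // mul1r expr0 mul1r.
Qed.

Lemma vanishes_sub1 k (X e : RF) :
  vanishes i k (X - 1 - toRF 'X_i ^+ 2 * e) -> vanishes i 0 e ->
  (2 <= k)%N -> vanishes i 2 (X - 1).
Proof.
move=> h he hk.
rewrite (_ : X - 1 = (X - 1 - toRF 'X_i ^+ 2 * e) + toRF 'X_i ^+ 2 * e); last by ring.
apply: vanishesD; first exact: vanishesW h.
exact: (@vanishesMW 2 0 2 _ _ (vanishes_Xn 2) he).
Qed.

Lemma vanishes0_sub1 (X : RF) : vanishes i 1 (X - 1) -> vanishes i 0 X.
Proof.
move=> h; rewrite (_ : X = (X - 1) + 1); last by ring.
by apply: vanishesD; [exact: vanishesW h | exact: vanishes1].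
Qed.

Lemma neq0_sub1 (X : RF) : vanishes i 1 (X - 1) -> X != 0.
Proof. by case/vanishes_inv1D; rewrite addrC subrK. Qed.

Lemma expansion_quotient_identity (F : fieldType) (t kap k r em s h D : F) :
  D = 1 + (t ^+ 2 * h + s) -> D != 0 ->
  ((kap + t ^+ 2 * k) + (1 + t ^+ 2 * em + r) ^+ 2) / D - 1
    - t ^+ 2 * (2%:R * em + k - h) =
  (kap + t ^+ 4 * em ^+ 2 + r * (2%:R + 2%:R * t ^+ 2 * em + r)
   - t ^+ 4 * (h * (2%:R * em + k - h)) - s * (1 + t ^+ 2 * (2%:R * em + k - h))) * D^-1.
Proof. by move=> -> hD; field. Qed.

Lemma expansion_quotient (MT K Mm D h k em : RF) :
  MT = (K + Mm ^+ 2) / D ->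
  vanishes i 4 (D - 1 - toRF 'X_i ^+ 2 * h) ->
  vanishes i 4 (K - toRF 'X_i ^+ 2 * k) ->
  vanishes i 4 (Mm - 1 - toRF 'X_i ^+ 2 * em) ->
  vanishes i 0 em -> vanishes i 0 h -> vanishes i 0 k ->
  vanishes i 4 (MT - 1 - toRF 'X_i ^+ 2 * (2%:R * em + k - h)).
Proof.
move=> eT hs hk hr he hh hkk; set t := toRF 'X_i.
set s := D - 1 - t ^+ 2 * h in hs.
set kap := K - t ^+ 2 * k in hk.
set r := Mm - 1 - t ^+ 2 * em in hr.
have eD : D = 1 + (t ^+ 2 * h + s) by rewrite /s; ring.
have [hD0 hDi] : D != 0 /\ vanishes i 0 D^-1.
  rewrite eD; apply: vanishes_inv1D; apply: vanishesD; last exact: vanishesW hs.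
  exact: (@vanishesMW 2 0 1 _ _ (vanishes_Xn 2) hh).
have eK : K = kap + t ^+ 2 * k by rewrite /kap; ring.
have eM : Mm = 1 + t ^+ 2 * em + r by rewrite /r; ring.
set c := 2%:R * em + k - h.
have -> : MT - 1 - t ^+ 2 * c =
  (kap + t ^+ 4 * em ^+ 2 + r * (2%:R + 2%:R * t ^+ 2 * em + r)
   - t ^+ 4 * (h * c) - s * (1 + t ^+ 2 * c)) * D^-1.
  by rewrite eT eK eM /c; apply: expansion_quotient_identity.
have hc : vanishes i 0 c.
  apply: vanishesB => //; apply: vanishesD => //.
  exact: (@vanishesMW 0 0 0 _ _ (vanishes_nat 2) he).
apply: (@vanishesMW 4 0 4) => //.
apply: vanishesB; first apply: vanishesB; first apply: vanishesD; first apply: vanishesD.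
- exact: hk.
- apply: (@vanishesMW 4 0 4) => //; first exact: vanishes_Xn.
  by rewrite expr2; apply: (@vanishesMW 0 0 0).
- apply: (@vanishesMW 4 0 4) => //.
  apply: vanishesD; last exact: vanishesW hr.
  apply: vanishesD; first exact: vanishes_nat.
  apply: (@vanishesMW 0 0 0) => //.
  by apply: (@vanishesMW 0 2 0) => //; [exact: vanishes_nat | exact: vanishes_Xn].
- apply: (@vanishesMW 4 0 4) => //; first exact: vanishes_Xn.
  exact: (@vanishesMW 0 0 0).
- apply: (@vanishesMW 4 0 4) => //.
  apply: vanishesD; first exact: vanishes1.
  by apply: (@vanishesMW 2 0 0) => //; exact: vanishes_Xn.
Qed.

End Vanishing.

(* [field] does not terminate on the concrete field [RF]: field identities are
   proved over an abstract field and then instantiated. *)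
Lemma markov_weight_identity (F : fieldType) (MA MC Mm MT wA wm wT : F) :
  MT = (MC ^+ 2 + Mm ^+ 2) / MA -> MA != 0 -> wA != 0 -> wT * wA = wm ^+ 2 ->
  MT * wT = ((MC * wm) ^+ 2 + (Mm * wm) ^+ 2) / (MA * wA).
Proof.
move=> -> hA hwA hw.
have -> : wT = wm ^+ 2 / wA by rewrite -hw mulfK.
by field; rewrite hA hwA.
Qed.

Lemma vanishes_markov_step (MA MC Mm MT wA wm wT eA em : RF) i :
  MT = (MC ^+ 2 + Mm ^+ 2) / MA -> MA != 0 -> wA != 0 -> wT * wA = wm ^+ 2 ->
  vanishes i 4 (MA * wA - 1 - toRF 'X_i ^+ 2 * eA) ->
  vanishes i 4 (Mm * wm - 1 - toRF 'X_i ^+ 2 * em) ->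
  vanishes i 0 eA -> vanishes i 0 em -> vanishes i 4 ((MC * wm) ^+ 2) ->
  vanishes i 4 (MT * wT - 1 - toRF 'X_i ^+ 2 * (2%:R * em - eA)).
Proof.
move=> eT hA hwA hw hsA hsm heA hem hC.
rewrite -[2%:R * em]addr0.
apply: (expansion_quotient (markov_weight_identity eT hA hwA hw)) => //;
  last exact: vanishes0.
by rewrite mulr0 subr0.
Qed.

(* The variant where the term M_C^2 is not negligible but contributes t^2 g^2. *)
Lemma vanishes_markov_step_tangent (MC Mm MTw wC wm em g h : RF) i :
  MTw = ((MC * wC) ^+ 2 * toRF 'X_i ^+ 2 * g ^+ 2 + (Mm * wm) ^+ 2)
          / (1 + toRF 'X_i ^+ 2 * h) ->
  vanishes i 2 (MC * wC - 1) ->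
  vanishes i 4 (Mm * wm - 1 - toRF 'X_i ^+ 2 * em) ->
  vanishes i 0 em -> vanishes i 0 g -> vanishes i 0 h ->
  vanishes i 4 (MTw - 1 - toRF 'X_i ^+ 2 * (2%:R * em + g ^+ 2 - h)).
Proof.
move=> e hC hm hem hg hh.
apply: (expansion_quotient e) => //; last exact: vanishes0X hg.
  by rewrite (_ : _ - _ - _ = 0); [exact: vanishes0 | ring].
have sqr_sub (F : comRingType) (X t c : F) : X ^+ 2 * t ^+ 2 * c ^+ 2 - t ^+ 2 * c ^+ 2 =
    t ^+ 2 * c ^+ 2 * ((X - 1) * (X + 1)) by ring.
rewrite sqr_sub.
apply: (@vanishesMW _ 2 2 4) => //.
  by apply: (@vanishesMW _ 2 0 2) => //; [exact: vanishes_Xn | exact: vanishes0X].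
apply: (@vanishesMW _ 2 0 2) => //.
rewrite (_ : MC * wC + 1 = (MC * wC - 1) + 2%:R); last by ring.
by apply: vanishesD; [exact: vanishesW hC | exact: vanishes_nat].
Qed.

Definition ix : 'I_3 := 0.
Definition iy : 'I_3 := 1.
Definition iz : 'I_3 := 2.
Lemma yFE : yF = toRF 'X_iy. Proof. by []. Qed.
Lemma zFE : zF = toRF 'X_iz. Proof. by []. Qed.

Definition SF : RF := xF ^+ 2 + yF ^+ 2.
Definition TF : RF := xF ^+ 2 + zF ^+ 2.

Lemma ev0_X_neq0 i j : j != i -> ev0 i 'X_j != 0.
Proof. by move=> ji; rewrite ev0_X // mpolyXU_neq0. Qed.

Lemma ev0_sqrD_neq0 i j k : j != i -> k != i -> ev0 i ('X_j ^+ 2 + 'X_k ^+ 2) != 0.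
Proof.
move=> ji ki; rewrite ev0D !ev0X !ev0_X //; apply: (@mpoly_neq0 _ (fun _ => 1)).
by rewrite mevalD !expr2 !mevalM !mevalXU.
Qed.

Lemma SFE : SF = toRF ('X_ix ^+ 2 + 'X_iy ^+ 2). Proof. by rewrite toRFD !toRFX. Qed.
Lemma TFE : TF = toRF ('X_ix ^+ 2 + 'X_iz ^+ 2). Proof. by rewrite toRFD !toRFX. Qed.

Lemma xF_neq0 : xF != 0. Proof. exact: (@toRF_ev0_neq0 iz) (ev0_X_neq0 _). Qed.
Lemma yF_neq0 : yF != 0. Proof. exact: (@toRF_ev0_neq0 iz) (ev0_X_neq0 _). Qed.
Lemma zF_neq0 : zF != 0. Proof. exact: (@toRF_ev0_neq0 iy) (ev0_X_neq0 _). Qed.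
Lemma SF_neq0 : SF != 0. Proof. by rewrite SFE (@toRF_ev0_neq0 iz) ?ev0_sqrD_neq0. Qed.
Lemma TF_neq0 : TF != 0. Proof. by rewrite TFE (@toRF_ev0_neq0 iy) ?ev0_sqrD_neq0. Qed.

Lemma vanishes0_x i : vanishes i 0 xF. Proof. exact: vanishes_poly. Qed.
Lemma vanishes0_y i : vanishes i 0 yF. Proof. exact: vanishes_poly. Qed.
Lemma vanishes0_z i : vanishes i 0 zF. Proof. exact: vanishes_poly. Qed.
Lemma vanishes0_S i : vanishes i 0 SF. Proof. rewrite SFE; exact: vanishes_poly. Qed.
Lemma vanishes0_T i : vanishes i 0 TF. Proof. rewrite TFE; exact: vanishes_poly. Qed.

Lemma vanishes_z_xV : vanishes iz 0 xF^-1. Proof. exact/vanishes_polyV/ev0_X_neq0. Qed.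
Lemma vanishes_z_yV : vanishes iz 0 yF^-1. Proof. exact/vanishes_polyV/ev0_X_neq0. Qed.
Lemma vanishes_z_SV : vanishes iz 0 SF^-1.
Proof. by rewrite SFE; apply/vanishes_polyV/ev0_sqrD_neq0. Qed.
Lemma vanishes_y_xV : vanishes iy 0 xF^-1. Proof. exact/vanishes_polyV/ev0_X_neq0. Qed.
Lemma vanishes_y_zV : vanishes iy 0 zF^-1. Proof. exact/vanishes_polyV/ev0_X_neq0. Qed.
Lemma vanishes_y_TV : vanishes iy 0 TF^-1.
Proof. by rewrite TFE; apply/vanishes_polyV/ev0_sqrD_neq0. Qed.

Definition degP (p q : nat) := (p + q - 1)%N.

(* With n = degP p q, M_{p/q} wz = P_{p/q}(x^2,y^2,z^2) / S^n and
   M_{p/q} wy = P_{p/q}(x^2,y^2,z^2) / (x^(2p) T^(q-1)); the expansions in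
   [markov_expansions] thus determine P_{p/q} modulo w^2 and modulo v^2. *)
Definition wz (p q : nat) : RF :=
  zF ^+ degP p q * xF ^+ (p - 1) * yF ^+ (q - 1) * (SF ^+ degP p q)^-1.
Definition ez (p q : nat) : RF :=
  ((q - 1)%:R * xF ^+ 2 + (p - 1)%:R * yF ^+ 2) / SF ^+ 2.
Definition wy (p q : nat) : RF :=
  yF ^+ (q - 1) * zF ^+ degP p q * (xF ^+ p.+1)^-1 * (TF ^+ (q - 1))^-1.
Definition fy (p q : nat) : RF :=
  ((degP p q)%:R * xF ^+ 2 + (3 * p - 1)%:R * zF ^+ 2) / TF ^+ 2.

Definition markov_expansions (M : nat -> nat -> RF) (p q : nat) : Prop :=
 [/\ M p q != 0 /\ vanishes iz 0 (M p q * zF ^+ degP p q),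
     vanishes iy 1 (M p q * yF ^+ q),
     ((0 < p)%N -> (0 < q)%N -> vanishes iz 4 (M p q * wz p q - 1 - zF ^+ 2 * ez p q)),
     ((0 < q)%N -> vanishes iy 2 (M p q * wy p q - 1))
   & ((1 < q)%N -> vanishes iy 4 (M p q * wy p q - 1 - yF ^+ 2 * fy p q))].

Lemma vanishes0_ez p q : vanishes iz 0 (ez p q).
Proof.
apply: (@vanishesMW _ 0 0 0) => //; last exact/vanishes0XV/vanishes_z_SV.
by apply: vanishesD; apply: (@vanishesMW _ 0 0 0) => //;
  [exact: vanishes_nat | exact/vanishes0X/vanishes0_x | exact: vanishes_nat
  | exact/vanishes0X/vanishes0_y].
Qed.

Lemma vanishes0_fy p q : vanishes iy 0 (fy p q).
Proof.
apply: (@vanishesMW _ 0 0 0) => //; last exact/vanishes0XV/vanishes_y_TV.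
by apply: vanishesD; apply: (@vanishesMW _ 0 0 0) => //;
  [exact: vanishes_nat | exact/vanishes0X/vanishes0_x | exact: vanishes_nat
  | exact/vanishes0X/vanishes0_z].
Qed.

(* [done] may try to decide an [_ != 0] goal in [RF] by a computation that does
   not terminate, so such goals are closed explicitly. *)
Lemma mul4_neq0 (F : idomainType) (a b c d : F) :
  a != 0 -> b != 0 -> c != 0 -> d != 0 -> a * b * c * d != 0.
Proof. by move=> *; rewrite !mulf_neq0. Qed.

Lemma wz_neq0 p q : wz p q != 0.
Proof.
apply: mul4_neq0; [exact: expf_neq0 zF_neq0 | exact: expf_neq0 xF_neq0
  | exact: expf_neq0 yF_neq0 | exact/invr_neq0/expf_neq0/SF_neq0].
Qed.

Lemma wy_neq0 p q : wy p q != 0.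
Proof.
apply: mul4_neq0; [exact: expf_neq0 yF_neq0 | exact: expf_neq0 zF_neq0
  | exact/invr_neq0/expf_neq0/xF_neq0 | exact/invr_neq0/expf_neq0/TF_neq0].
Qed.

Lemma zpow_weight_identity (F : fieldType) (M z x y S : F) n a b :
  S != 0 -> x != 0 -> y != 0 ->
  M * z ^+ n = M * (z ^+ n * x ^+ a * y ^+ b * (S ^+ n)^-1)
               * S ^+ n * (x^-1) ^+ a * (y^-1) ^+ b.
Proof. by move=> hS hx hy; rewrite !exprVn; field; rewrite !expf_neq0. Qed.

Lemma ypow_weight_identity (F : fieldType) (M z x y T : F) n a b :
  T != 0 -> x != 0 -> z != 0 ->
  M * y ^+ b.+1 = M * (y ^+ b * z ^+ n * (x ^+ a)^-1 * (T ^+ b)^-1)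
                  * y * x ^+ a * T ^+ b * (z^-1) ^+ n.
Proof. by move=> hT hx hz; rewrite !exprVn exprS; field; rewrite !expf_neq0. Qed.

Lemma vanishes0_zpow (M : RF) p q :
  vanishes iz 1 (M * wz p q - 1) -> vanishes iz 0 (M * zF ^+ degP p q).
Proof.
move=> h.
rewrite (@zpow_weight_identity _ M zF xF yF SF _ (p - 1) (q - 1) SF_neq0 xF_neq0 yF_neq0).
apply: (@vanishesMW _ 0 0 0) => //; last exact/vanishes0X/vanishes_z_yV.
apply: (@vanishesMW _ 0 0 0) => //; last exact/vanishes0X/vanishes_z_xV.
apply: (@vanishesMW _ 0 0 0) => //; last exact/vanishes0X/vanishes0_S.
exact: vanishes0_sub1.
Qed.

Lemma vanishes1_ypow (M : RF) p q : (0 < q)%N ->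
  vanishes iy 1 (M * wy p q - 1) -> vanishes iy 1 (M * yF ^+ q).
Proof.
move=> hq h; rewrite -[in yF ^+ q](subnK hq) addn1.
rewrite (@ypow_weight_identity _ M zF xF yF TF (degP p q) p.+1 _ TF_neq0 xF_neq0 zF_neq0).
apply: (@vanishesMW _ 1 0 1) => //; last exact/vanishes0X/vanishes_y_zV.
apply: (@vanishesMW _ 1 0 1) => //; last exact/vanishes0X/vanishes0_T.
apply: (@vanishesMW _ 1 0 1) => //; last exact/vanishes0X/vanishes0_x.
apply: (@vanishesMW _ 0 1 1) => //; first exact: vanishes0_sub1.
by rewrite yFE -(expr1 (toRF _)); exact: vanishes_Xn.
Qed.

Lemma exprD_sqr (F : comRingType) (u : F) k l j :
  (k + l = j * 2)%N -> u ^+ k * u ^+ l = (u ^+ j) ^+ 2.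
Proof. by move=> h; rewrite -exprD h exprM. Qed.

Lemma exprVD_sqr (F : fieldType) (u : F) k l j :
  (k + l = j * 2)%N -> (u ^+ k)^-1 * (u ^+ l)^-1 = ((u ^+ j)^-1) ^+ 2.
Proof. by move=> h; rewrite -invfM (exprD_sqr _ h) exprVn. Qed.

Lemma mul4_sqr (F : comRingType) (a1 a2 a3 b1 b2 b3 c1 c2 c3 d1 d2 d3 : F) :
  a1 * a2 = a3 ^+ 2 -> b1 * b2 = b3 ^+ 2 -> c1 * c2 = c3 ^+ 2 -> d1 * d2 = d3 ^+ 2 ->
  (a1 * b1 * c1 * d1) * (a2 * b2 * c2 * d2) = (a3 * b3 * c3 * d3) ^+ 2.
Proof. by move=> ha hb hc hd; rewrite !exprMn -ha -hb -hc -hd; ring. Qed.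

Lemma natr_mid (F : comRingType) (u v w : nat) :
  (u + v = w * 2)%N -> (u%:R : F) = 2%:R * w%:R - v%:R.
Proof. by move=> h; apply/eqP; rewrite eq_sym subr_eq -natrM -natrD mulnC -h. Qed.

Lemma lincomb_mid (F : fieldType) (u1 v1 u2 v2 u3 v3 X Y D : F) :
  u1 = 2%:R * u3 - u2 -> v1 = 2%:R * v3 - v2 ->
  (u1 * X + v1 * Y) / D = 2%:R * ((u3 * X + v3 * Y) / D) - (u2 * X + v2 * Y) / D.
Proof. by move=> -> ->; ring. Qed.

Lemma wz_farey a b c d : (0 < a)%N -> (0 < b)%N ->
  wz (a + 2 * c) (b + 2 * d) * wz a b = wz (a + c) (b + d) ^+ 2.
Proof.
move=> ha hb; apply: mul4_sqr; rewrite /degP.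
- by apply: exprD_sqr; lia.
- by apply: exprD_sqr; lia.
- by apply: exprD_sqr; lia.
- by apply: exprVD_sqr; lia.
Qed.

Lemma wy_farey a b c d : (0 < b)%N ->
  wy (a + 2 * c) (b + 2 * d) * wy a b = wy (a + c) (b + d) ^+ 2.
Proof.
move=> hb; apply: mul4_sqr; rewrite /degP.
- by apply: exprD_sqr; lia.
- by apply: exprD_sqr; lia.
- by apply: exprVD_sqr; lia.
- by apply: exprVD_sqr; lia.
Qed.

Lemma ez_farey a b c d : (0 < a)%N -> (0 < b)%N ->
  ez (a + 2 * c) (b + 2 * d) = 2%:R * ez (a + c) (b + d) - ez a b.
Proof. by move=> ha hb; apply: lincomb_mid; apply: natr_mid; lia. Qed.

Lemma fy_farey a b c d : (0 < a)%N ->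
  fy (a + 2 * c) (b + 2 * d) = 2%:R * fy (a + c) (b + d) - fy a b.
Proof. by move=> ha; apply: lincomb_mid; apply: natr_mid; rewrite /degP; lia. Qed.

Section FareyStep.
Variables (M : nat -> nat -> RF) (a b c d : nat).
Hypothesis eM :
  M (a + 2 * c)%N (b + 2 * d)%N = (M c d ^+ 2 + M (a + c)%N (b + d)%N ^+ 2) / M a b.
Hypotheses (hA : markov_expansions M a b) (hC : markov_expansions M c d)
  (hm : markov_expansions M (a + c) (b + d)).

(* M_C z^(degP c d) is regular at z = 0, so the C-term M_C wz (a+c) (b+d) is
   O(z^(a+b)) and negligible. *)
Lemma expansion_z_step : (0 < a)%N -> (0 < b)%N -> (0 < c + d)%N ->
  vanishes iz 4 (M (a + 2 * c)%N (b + 2 * d)%N * wz (a + 2 * c) (b + 2 * d) - 1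
                 - zF ^+ 2 * ez (a + 2 * c) (b + 2 * d)).
Proof.
move=> ha hb hcd; case: hA hC hm => [[nzA _] _ szA _ _] [[_ fzC] _ _ _ _] [_ _ szm _ _].
have hCm : vanishes iz 4 ((M c d * wz (a + c) (b + d)) ^+ 2).
  have -> : M c d * wz (a + c) (b + d) =
      (M c d * zF ^+ degP c d) * zF ^+ (a + b) * (xF ^+ (a + c - 1) * yF ^+ (b + d - 1)
        * (SF ^+ degP (a + c) (b + d))^-1).
    rewrite /wz (_ : degP (a + c) (b + d) = degP c d + (a + b))%N; last by rewrite /degP; lia.
    by rewrite exprD; ring.
  apply: (@vanishesXW _ 2) => //.
  apply: (@vanishesMW _ 2 0 2) => //; last first.
    apply: (@vanishesMW _ 0 0 0) => //; last exact/vanishes0XV/vanishes_z_SV.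
    by apply: (@vanishesMW _ 0 0 0) => //; apply: vanishes0X;
      [exact: vanishes0_x | exact: vanishes0_y].
  apply: (@vanishesMW _ 0 (a + b) 2) => //; last by lia.
  by rewrite zFE; exact: vanishes_Xn.
have szm' : vanishes iz 4 (M (a + c) (b + d) * wz (a + c) (b + d) - 1
                            - zF ^+ 2 * ez (a + c) (b + d)) by apply: szm; lia.
rewrite ez_farey //.
exact: (vanishes_markov_step eM nzA (wz_neq0 a b) (wz_farey c d ha hb) (szA ha hb)
  szm' (vanishes0_ez _ _) (vanishes0_ez _ _) hCm).
Qed.

(* Similarly M_C y^d vanishes at y = 0, so the C-term is O(y^b). *)
Lemma expansion_y_step : (0 < a)%N -> (1 < b)%N ->
  vanishes iy 4 (M (a + 2 * c)%N (b + 2 * d)%N * wy (a + 2 * c) (b + 2 * d) - 1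
                 - yF ^+ 2 * fy (a + 2 * c) (b + 2 * d)).
Proof.
move=> ha hb; case: hA hC hm => [[nzA _] _ _ _ syA] [_ fyC _ _ _] [_ _ _ _ sym].
have hCm : vanishes iy 4 ((M c d * wy (a + c) (b + d)) ^+ 2).
  have -> : M c d * wy (a + c) (b + d) =
      (M c d * yF ^+ d) * yF ^+ (b - 1) * (zF ^+ degP (a + c) (b + d)
        * (xF ^+ (a + c).+1)^-1 * (TF ^+ (b + d - 1))^-1).
    rewrite /wy (_ : (b + d - 1) = d + (b - 1))%N; last by lia.
    by rewrite exprD; ring.
  apply: (@vanishesXW _ 2) => //.
  apply: (@vanishesMW _ 2 0 2) => //; last first.
    apply: (@vanishesMW _ 0 0 0) => //; last exact/vanishes0XV/vanishes_y_TV.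
    apply: (@vanishesMW _ 0 0 0) => //; last exact/vanishes0XV/vanishes_y_xV.
    exact/vanishes0X/vanishes0_z.
  apply: (@vanishesMW _ 1 (b - 1) 2) => //; last by lia.
  by rewrite yFE; exact: vanishes_Xn.
have sym' : vanishes iy 4 (M (a + c) (b + d) * wy (a + c) (b + d) - 1
                            - yF ^+ 2 * fy (a + c) (b + d)) by apply: sym; lia.
rewrite fy_farey //.
exact: (vanishes_markov_step eM nzA (wy_neq0 a b) (wy_farey a c d (ltnW hb)) (syA hb)
  sym' (vanishes0_fy _ _) (vanishes0_fy _ _) hCm).
Qed.

End FareyStep.

Lemma markov_expansions_of (M : nat -> nat -> RF) p q : (0 < p)%N -> (0 < q)%N ->
  vanishes iz 4 (M p q * wz p q - 1 - zF ^+ 2 * ez p q) ->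
  vanishes iy 2 (M p q * wy p q - 1) ->
  ((1 < q)%N -> vanishes iy 4 (M p q * wy p q - 1 - yF ^+ 2 * fy p q)) ->
  markov_expansions M p q.
Proof.
move=> hp hq sz gy sy.
have s1 : vanishes iz 1 (M p q * wz p q - 1).
  exact: vanishesW (vanishes_sub1 sz (vanishes0_ez _ _) _).
split => //.
- split; last exact: vanishes0_zpow s1.
  by have := neq0_sub1 s1; apply: contraNneq => ->; rewrite mul0r.
- by apply: vanishes1_ypow hq _; apply: vanishesW gy.
Qed.

Lemma markov_expansions_of_y4 (M : nat -> nat -> RF) p q : (0 < p)%N -> (1 < q)%N ->
  vanishes iz 4 (M p q * wz p q - 1 - zF ^+ 2 * ez p q) ->
  vanishes iy 4 (M p q * wy p q - 1 - yF ^+ 2 * fy p q) ->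
  markov_expansions M p q.
Proof.
move=> hp hq sz sy; apply: markov_expansions_of => //; first exact: ltnW.
exact: vanishes_sub1 sy (vanishes0_fy _ _) _.
Qed.

Lemma vanishes_y1 : vanishes iy 1 yF.
Proof. by rewrite yFE -(expr1 (toRF _)); exact: vanishes_Xn. Qed.

Lemma markov_expansions10 (M : nat -> nat -> RF) : M 1%N 0%N = yF -> markov_expansions M 1 0.
Proof.
move=> e; rewrite /markov_expansions e /degP /= expr0 mulr1; split => //.
- by split; [exact: yF_neq0 | exact: vanishes0_y].
- exact: vanishes_y1.
Qed.

Lemma markov_expansions01 (M : nat -> nat -> RF) : M 0%N 1%N = xF -> markov_expansions M 0 1.
Proof.
move=> e; rewrite /markov_expansions e /degP /= expr0 mulr1; split => //.
- by split; [exact: xF_neq0 | exact: vanishes0_x].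
- by rewrite expr1; apply: (@vanishesMW _ 0 1 1) => //; [exact: vanishes0_x | exact: vanishes_y1].
- move=> _; rewrite /wy /= !expr0 !mul1r invr1 mulr1 expr1 mulfV; last exact: xF_neq0.
  by rewrite subrr; exact: vanishes0.
Qed.

Lemma expansion11_identity_z (F : fieldType) (x y z : F) : z != 0 -> x ^+ 2 + y ^+ 2 != 0 ->
  (x ^+ 2 + y ^+ 2) / z * (z ^+ 1 * x ^+ 0 * y ^+ 0 * ((x ^+ 2 + y ^+ 2) ^+ 1)^-1) - 1
    - z ^+ 2 * ((0%:R * x ^+ 2 + 0%:R * y ^+ 2) / (x ^+ 2 + y ^+ 2) ^+ 2) = 0.
Proof. by move=> hz hS; field_nz. Qed.

Lemma expansion11_identity_y (F : fieldType) (x y z T : F) : z != 0 -> x != 0 -> T != 0 ->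
  (x ^+ 2 + y ^+ 2) / z * (y ^+ 0 * z ^+ 1 * (x ^+ 2)^-1 * (T ^+ 0)^-1) - 1
    = y ^+ 2 * (x ^-1) ^+ 2.
Proof. by move=> hz hx hT; field_nz. Qed.

Lemma markov_expansions11 (M : nat -> nat -> RF) :
  M 1%N 1%N = SF / zF -> markov_expansions M 1 1.
Proof.
move=> e; apply: markov_expansions_of => //.
- rewrite e /wz /ez /degP /SF /= expansion11_identity_z; first exact: vanishes0.
    exact: zF_neq0.
  exact: SF_neq0.
- rewrite e /wy /degP /SF /= expansion11_identity_y;
    [| exact: zF_neq0 | exact: xF_neq0 | exact: TF_neq0].
  apply: (@vanishesMW _ 2 0 2) => //; first by rewrite yFE; exact: vanishes_Xn.
  exact/vanishes0X/vanishes_y_xV.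
Qed.

Lemma expansion12_identity_z (F : fieldType) (x y z : F) :
  z != 0 -> y != 0 -> x ^+ 2 + y ^+ 2 != 0 ->
  (x ^+ 2 + ((x ^+ 2 + y ^+ 2) / z) ^+ 2) / y
    * (z ^+ 2 * x ^+ 0 * y ^+ 1 * ((x ^+ 2 + y ^+ 2) ^+ 2)^-1)
   - 1 - z ^+ 2 * ((1%:R * x ^+ 2 + 0%:R * y ^+ 2) / (x ^+ 2 + y ^+ 2) ^+ 2) = 0.
Proof. by move=> *; field_nz. Qed.

Lemma expansion12_identity_y (F : fieldType) (x y z : F) :
  z != 0 -> y != 0 -> x != 0 -> x ^+ 2 + z ^+ 2 != 0 ->
  (x ^+ 2 + ((x ^+ 2 + y ^+ 2) / z) ^+ 2) / y
    * (y ^+ 1 * z ^+ 2 * (x ^+ 2)^-1 * ((x ^+ 2 + z ^+ 2) ^+ 1)^-1)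
   - 1 - y ^+ 2 * ((2%:R * x ^+ 2 + 2%:R * z ^+ 2) / (x ^+ 2 + z ^+ 2) ^+ 2)
  = y ^+ 4 * (x^-1 ^+ 2 * (x ^+ 2 + z ^+ 2)^-1).
Proof. by move=> *; field_nz. Qed.

Lemma markov_expansions12 (M : nat -> nat -> RF) :
  M 1%N 0%N = yF -> M 0%N 1%N = xF -> M 1%N 1%N = SF / zF ->
  M 1%N 2%N = (M 0%N 1%N ^+ 2 + M 1%N 1%N ^+ 2) / M 1%N 0%N ->
  markov_expansions M 1 2.
Proof.
move=> e10 e01 e11 e; apply: markov_expansions_of_y4 => //; rewrite e e10 e01 e11.
  rewrite /wz /ez /SF expansion12_identity_z; first exact: vanishes0.
  - exact: zF_neq0.
  - exact: yF_neq0.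
  exact: SF_neq0.
rewrite /wy /fy /SF expansion12_identity_y;
  [| exact: zF_neq0 | exact: yF_neq0 | exact: xF_neq0 | exact: TF_neq0].
apply: (@vanishesMW _ 4 0 4) => //; first by rewrite yFE; exact: vanishes_Xn.
apply: (@vanishesMW _ 0 0 0) => //; first exact/vanishes0X/vanishes_y_xV.
exact: vanishes_y_TV.
Qed.

Lemma tangent_form_x (F : fieldType) (MT MC Mm X wT wC wm t g : F) :
  MT = (MC ^+ 2 + Mm ^+ 2) / X -> X != 0 -> wT = X * wm ^+ 2 -> wm = wC * (t * g) ->
  MT * wT = ((MC * wC) ^+ 2 * t ^+ 2 * g ^+ 2 + (Mm * wm) ^+ 2) / (1 + t ^+ 2 * 0).
Proof. by move=> -> hX -> ->; rewrite mulr0 addr0 divr1; field_nz. Qed.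

Lemma wz_x_parent_identity (F : fieldType) (z x y S : F) k j : S != 0 ->
  z ^+ (k * 2) * x ^+ 1 * y ^+ (j * 2) * (S ^+ (k * 2))^-1 =
  x * (z ^+ k * x ^+ 0 * y ^+ j * (S ^+ k)^-1) ^+ 2.
Proof. by move=> hS; rewrite !exprM; field_nz; rewrite expf_neq0. Qed.

Lemma wz_x_child_identity (F : fieldType) (z x y S : F) k j : S != 0 ->
  z ^+ (k + 1) * x ^+ 0 * y ^+ (j + 1) * (S ^+ (k + 1))^-1 =
  (z ^+ k * x ^+ 0 * y ^+ j * (S ^+ k)^-1) * (z * (y / S)).
Proof. by move=> hS; rewrite !exprD; field_nz; rewrite expf_neq0. Qed.

Lemma ez_x_parent_identity (F : fieldType) (x y S : F) d : S != 0 ->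
  ((d + d)%:R * x ^+ 2 + 1%:R * y ^+ 2) / S ^+ 2 =
  2%:R * ((d%:R * x ^+ 2 + 0%:R * y ^+ 2) / S ^+ 2) + (y / S) ^+ 2 - 0.
Proof. by move=> hS; rewrite natrD; field_nz. Qed.

(* The Farey triples with A = 0/1, where M_A = x is not normalized like the others:
   M_C = M_{1/d} then contributes at order z^2 (resp. y^2). *)
Lemma wz_x_parent d :
  wz 2 (1 + 2 * d) = xF * wz 1 (1 + d) ^+ 2.
Proof.
rewrite /wz /degP.
rewrite (_ : (2 + (1 + 2 * d) - 1 = (1 + (1 + d) - 1) * 2)%N); last by lia.
rewrite (_ : (1 + 2 * d - 1 = (1 + d - 1) * 2)%N); last by lia.
rewrite (_ : (2 - 1 = 1)%N) // (_ : (1 - 1 = 0)%N) //.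
exact: (@wz_x_parent_identity _ _ _ _ _ _ _ SF_neq0).
Qed.

Lemma wz_x_child d : (0 < d)%N ->
  wz 1 (1 + d) = wz 1 d * (zF * (yF / SF)).
Proof.
move=> hd.
rewrite /wz /degP.
rewrite (_ : (1 + (1 + d) - 1 = (1 + d - 1) + 1)%N); last by lia.
rewrite (_ : (1 + d - 1 = (d - 1) + 1)%N); last by lia.
rewrite (_ : (1 - 1 = 0)%N) //.
exact: (@wz_x_child_identity _ _ _ _ _ _ _ SF_neq0).
Qed.

Lemma ez_x_parent d :
  ez 2 (1 + 2 * d) = 2%:R * ez 1 (1 + d) + (yF / SF) ^+ 2 - 0.
Proof.
rewrite /ez (_ : (1 + 2 * d - 1 = d + d)%N); last by lia.
rewrite (_ : (1 + d - 1 = d)%N); last by lia.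
exact: (@ez_x_parent_identity _ _ _ _ _ SF_neq0).
Qed.

Lemma expansion_z_step_x (M : nat -> nat -> RF) d : (0 < d)%N ->
  markov_expansions M 1 d -> markov_expansions M 1 (1 + d) -> M 0%N 1%N = xF ->
  M 2%N (1 + 2 * d)%N = (M 1%N d ^+ 2 + M 1%N (1 + d)%N ^+ 2) / M 0%N 1%N ->
  vanishes iz 4 (M 2%N (1 + 2 * d)%N * wz 2 (1 + 2 * d) - 1 - zF ^+ 2 * ez 2 (1 + 2 * d)).
Proof.
move=> hd [_ _ szC _ _] [_ _ szm _ _] e01 e.
rewrite e01 in e.
rewrite ez_x_parent.
apply: (vanishes_markov_step_tangent
  (tangent_form_x e xF_neq0 (wz_x_parent d) (wz_x_child hd)) _ (szm isT isT)).
- exact: vanishes_sub1 (szC isT hd) (vanishes0_ez _ _) _.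
- exact: vanishes0_ez.
- by apply: (@vanishesMW _ 0 0 0) => //; [exact: vanishes0_y | exact: vanishes_z_SV].
- exact: vanishes0.
Qed.

Lemma wy_x_parent_identity (F : fieldType) (y z x T : F) k n : x != 0 -> T != 0 ->
  y ^+ (k * 2) * z ^+ (n * 2) * (x ^+ 3)^-1 * (T ^+ (k * 2))^-1 =
  x * (y ^+ k * z ^+ n * (x ^+ 2)^-1 * (T ^+ k)^-1) ^+ 2.
Proof. by move=> hx hT; rewrite !exprM; field_nz. Qed.

Lemma wy_x_child_identity (F : fieldType) (y z x T : F) j n : x != 0 -> T != 0 ->
  y ^+ (j + 1) * z ^+ (n + 1) * (x ^+ 2)^-1 * (T ^+ (j + 1))^-1 =
  (y ^+ j * z ^+ n * (x ^+ 2)^-1 * (T ^+ j)^-1) * (y * (z / T)).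
Proof. by move=> hx hT; rewrite !exprD; field_nz. Qed.

Lemma fy_x_parent_identity (F : fieldType) (x z T : F) n : T != 0 ->
  ((n + n)%:R * x ^+ 2 + 5%:R * z ^+ 2) / T ^+ 2 =
  2%:R * ((n%:R * x ^+ 2 + 2%:R * z ^+ 2) / T ^+ 2) + (z / T) ^+ 2 - 0.
Proof. by move=> hT; rewrite natrD; field_nz. Qed.

Lemma wy_x_parent d :
  wy 2 (1 + 2 * d) = xF * wy 1 (1 + d) ^+ 2.
Proof.
rewrite /wy /degP.
rewrite (_ : (2 + (1 + 2 * d) - 1 = (1 + (1 + d) - 1) * 2)%N); last by lia.
rewrite (_ : (1 + 2 * d - 1 = (1 + d - 1) * 2)%N); last by lia.
exact: (@wy_x_parent_identity _ _ _ _ _ _ _ xF_neq0 TF_neq0).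
Qed.

Lemma wy_x_child d : (0 < d)%N ->
  wy 1 (1 + d) = wy 1 d * (yF * (zF / TF)).
Proof.
move=> hd.
rewrite /wy /degP.
rewrite (_ : (1 + (1 + d) - 1 = (1 + d - 1) + 1)%N); last by lia.
rewrite (_ : (1 + d - 1 = (d - 1) + 1)%N); last by lia.
exact: (@wy_x_child_identity _ _ _ _ _ _ _ xF_neq0 TF_neq0).
Qed.

Lemma fy_x_parent d :
  fy 2 (1 + 2 * d) = 2%:R * fy 1 (1 + d) + (zF / TF) ^+ 2 - 0.
Proof.
rewrite /fy /degP (_ : (2 + (1 + 2 * d) - 1
                        = (1 + (1 + d) - 1) + (1 + (1 + d) - 1))%N); last by lia.
exact: (@fy_x_parent_identity _ _ _ _ _ TF_neq0).
Qed.

Lemma expansion_y_step_x (M : nat -> nat -> RF) d : (0 < d)%N ->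
  markov_expansions M 1 d -> markov_expansions M 1 (1 + d) -> M 0%N 1%N = xF ->
  M 2%N (1 + 2 * d)%N = (M 1%N d ^+ 2 + M 1%N (1 + d)%N ^+ 2) / M 0%N 1%N ->
  vanishes iy 4 (M 2%N (1 + 2 * d)%N * wy 2 (1 + 2 * d) - 1 - yF ^+ 2 * fy 2 (1 + 2 * d)).
Proof.
move=> hd [_ _ _ gyC _] [_ _ _ _ sym] e01 e.
rewrite e01 in e.
rewrite fy_x_parent.
apply: (vanishes_markov_step_tangent
  (tangent_form_x e xF_neq0 (wy_x_parent d) (wy_x_child hd)) (gyC hd)).
- by apply: sym; lia.
- exact: vanishes0_fy.
- by apply: (@vanishesMW _ 0 0 0) => //; [exact: vanishes0_z | exact: vanishes_y_TV].
- exact: vanishes0.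
Qed.

Lemma tangent_form_S (F : fieldType) (MT MC Mm x y z S wT wC wm g : F) :
  MT = (MC ^+ 2 + Mm ^+ 2) / (S / z) -> S = x ^+ 2 + y ^+ 2 ->
  x != 0 -> z != 0 -> S != 0 ->
  wT = wm ^+ 2 * (x ^+ 2 / z) -> wm = wC * (y * g) ->
  MT * wT = ((MC * wC) ^+ 2 * y ^+ 2 * g ^+ 2 + (Mm * wm) ^+ 2) / (1 + y ^+ 2 * (x^-1) ^+ 2).
Proof.
move=> -> eS hx hz hS -> ew.
have hS' : x ^+ 2 + y ^+ 2 != 0 by rewrite -eS.
rewrite ew eS; rewrite eS in hS; field_nz.
Qed.

Lemma wy_S_parent_identity (F : fieldType) (y z x T : F) c : x != 0 -> T != 0 -> z != 0 ->
  y ^+ (c * 2 + 2) * z ^+ (c * 4 + 3) * (x ^+ (c * 2 + 2))^-1 * (T ^+ (c * 2 + 2))^-1 =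
  (y ^+ (c + 1) * z ^+ (c * 2 + 2) * (x ^+ (c + 2))^-1 * (T ^+ (c + 1))^-1) ^+ 2 * (x ^+ 2 / z).
Proof.
move=> hx hT hz.
rewrite (_ : (c * 4 = (c * 2) * 2)%N); last by rewrite -mulnA.
rewrite !exprD !exprM; field_nz.
Qed.

Lemma wy_S_child_identity (F : fieldType) (y z x T : F) c : x != 0 -> T != 0 ->
  y ^+ (c + 1) * z ^+ (c * 2 + 2) * (x ^+ (c + 2))^-1 * (T ^+ (c + 1))^-1 =
  (y ^+ c * z ^+ (c * 2) * (x ^+ (c + 1))^-1 * (T ^+ c)^-1) * (y * (z ^+ 2 * (x^-1 * T^-1))).
Proof.
move=> hx hT.
rewrite !exprD !exprM; field_nz.
Qed.

Lemma fy_S_parent_identity (F : fieldType) (x z T : F) c :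
  x != 0 -> T = x ^+ 2 + z ^+ 2 -> T != 0 ->
  ((c * 4 + 3)%:R * x ^+ 2 + (c * 6 + 2)%:R * z ^+ 2) / T ^+ 2 =
  2%:R * (((c * 2 + 2)%:R * x ^+ 2 + (c * 3 + 2)%:R * z ^+ 2) / T ^+ 2)
   + (z ^+ 2 * (x^-1 * T^-1)) ^+ 2 - (x^-1) ^+ 2.
Proof.
move=> hx eT hT; rewrite !natrD !natrM.
have hT' : x ^+ 2 + z ^+ 2 != 0 by rewrite -eT.
rewrite eT; field_nz.
Qed.

Lemma wy_S_parent c :
  wy (1 + 2 * c) (1 + 2 * (c + 1)) = wy (1 + c) (1 + (c + 1)) ^+ 2 * (xF ^+ 2 / zF).
Proof.
rewrite /wy /degP.
rewrite (_ : (1 + 2 * (c + 1) - 1 = c * 2 + 2)%N); last by lia.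
rewrite (_ : (1 + 2 * c + (1 + 2 * (c + 1)) - 1 = c * 4 + 3)%N); last by lia.
rewrite (_ : ((1 + 2 * c).+1 = c * 2 + 2)%N); last by lia.
rewrite (_ : (1 + (c + 1) - 1 = c + 1)%N); last by lia.
rewrite (_ : (1 + c + (1 + (c + 1)) - 1 = c * 2 + 2)%N); last by lia.
rewrite (_ : ((1 + c).+1 = c + 2)%N); last by lia.
exact: (@wy_S_parent_identity _ _ _ _ _ _ xF_neq0 TF_neq0 zF_neq0).
Qed.

Lemma wy_S_child c :
  wy (1 + c) (1 + (c + 1)) = wy c (c + 1) * (yF * (zF ^+ 2 * (xF^-1 * TF^-1))).
Proof.
rewrite /wy /degP.
rewrite (_ : (1 + (c + 1) - 1 = c + 1)%N); last by lia.
rewrite (_ : (1 + c + (1 + (c + 1)) - 1 = c * 2 + 2)%N); last by lia.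
rewrite (_ : ((1 + c).+1 = c + 2)%N); last by lia.
rewrite (_ : (c + 1 - 1 = c)%N); last by lia.
rewrite (_ : (c + (c + 1) - 1 = c * 2)%N); last by lia.
rewrite (_ : (c.+1 = c + 1)%N); last by lia.
exact: (@wy_S_child_identity _ _ _ _ _ _ xF_neq0 TF_neq0).
Qed.

Lemma fy_S_parent c :
  fy (1 + 2 * c) (1 + 2 * (c + 1)) =
    2%:R * fy (1 + c) (1 + (c + 1)) + (zF ^+ 2 * (xF^-1 * TF^-1)) ^+ 2 - (xF^-1) ^+ 2.
Proof.
rewrite /fy /degP.
rewrite (_ : (1 + 2 * c + (1 + 2 * (c + 1)) - 1 = c * 4 + 3)%N); last by lia.
rewrite (_ : (3 * (1 + 2 * c) - 1 = c * 6 + 2)%N); last by lia.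
rewrite (_ : (1 + c + (1 + (c + 1)) - 1 = c * 2 + 2)%N); last by lia.
rewrite (_ : (3 * (1 + c) - 1 = c * 3 + 2)%N); last by lia.
exact: (@fy_S_parent_identity _ _ _ _ _ xF_neq0 erefl TF_neq0).
Qed.

(* The Farey triples with A = 1/1, whose normalization differs along y = 0. *)
Lemma expansion_y_step_S (M : nat -> nat -> RF) c :
  markov_expansions M c (c + 1) -> markov_expansions M (1 + c) (1 + (c + 1)) ->
  M 1%N 1%N = SF / zF ->
  M (1 + 2 * c)%N (1 + 2 * (c + 1))%N =
    (M c (c + 1)%N ^+ 2 + M (1 + c)%N (1 + (c + 1))%N ^+ 2) / M 1%N 1%N ->
  vanishes iy 4 (M (1 + 2 * c)%N (1 + 2 * (c + 1))%N * wy (1 + 2 * c) (1 + 2 * (c + 1))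
                 - 1 - yF ^+ 2 * fy (1 + 2 * c) (1 + 2 * (c + 1))).
Proof.
move=> [_ _ _ gyC _] [_ _ _ _ sym] e11 e.
rewrite e11 in e.
rewrite fy_S_parent.
have hT := tangent_form_S e erefl xF_neq0 zF_neq0 SF_neq0 (wy_S_parent c) (wy_S_child c).
have hc : (0 < c + 1)%N by rewrite addn1.
have hq : (1 < 1 + (c + 1))%N by lia.
apply: (vanishes_markov_step_tangent hT (gyC hc) (sym hq)).
- exact: vanishes0_fy.
- apply: (@vanishesMW _ 0 0 0) => //; first exact/vanishes0X/vanishes0_z.
  by apply: (@vanishesMW _ 0 0 0) => //; [exact: vanishes_y_xV | exact: vanishes_y_TV].
- exact/vanishes0X/vanishes_y_xV.
Qed.

Lemma coprime_det1 m n u v : (u * m = v * n + 1)%N -> coprime m n.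
Proof.
move=> h.
have h1 : (gcdn m n %| u * m)%N := dvdn_mull u (dvdn_gcdl m n).
have h2 : (gcdn m n %| v * n)%N := dvdn_mull v (dvdn_gcdr m n).
rewrite /coprime -dvdn1 (_ : 1%N = u * m - v * n)%N; last by lia.
exact: dvdn_sub.
Qed.

Lemma farey_parents_coprime p q : coprime p q -> (1 <= p <= q)%N -> (2 <= q)%N ->
  exists c d, [/\ (1 <= d)%N, (2 * d <= q)%N, (2 * c <= p)%N &
     ((p * d = q * c + 1)%N \/ (q * c = p * d + 1)%N)].
Proof.
move=> cop /andP[hp hpq] hq.
have q0 : (0 < q)%N by lia.
case: (Bezoutl p q0) => d1 hd1 hdv.
rewrite gcdnC (eqP cop) in hdv.
case/dvdnP: hdv => c1 ec1.
have d1pos : (1 <= d1)%N.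
  case: (posnP d1) => [e0|//]; move: ec1; rewrite e0 mul0n addn0 => ec1.
  move: ec1 hq; clear; move=> ec1 hq.
  case: c1 ec1 => [|c1'] ec1; nia.
case: (leqP q (2 * d1)) => hle.
- have hc1 : (c1 <= p)%N.
    have : (c1 * q <= p * q)%N by rewrite -ec1; nia.
    by rewrite leq_pmul2r.
  exists (p - c1)%N, (q - d1)%N; split; try lia.
  + have : (2 * (p - c1) * q <= p * q)%N.
      have e2 : ((p - c1) * q = p * q - c1 * q)%N by rewrite mulnBl.
      rewrite -mulnA e2; nia.
    by rewrite leq_pmul2r //.
  + left; rewrite !mulnBr; nia.
- exists c1, d1; split.
  + lia.
  + lia.
  + have : (2 * c1 * q < (p + 1) * q)%N by nia.
    by rewrite ltn_pmul2r // addn1 ltnS.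
  + right; nia.
Qed.

Lemma coprimen0_eq1 a : coprime a 0 -> a = 1%N.
Proof. by rewrite /coprime gcdn0 => /eqP. Qed.

Lemma coprime0n_eq1 b : coprime 0 b -> b = 1%N.
Proof. by rewrite /coprime gcd0n => /eqP. Qed.

Lemma farey_parents p q : in_index p q -> (1 <= p)%N -> (2 <= q)%N ->
  exists a b c d, [/\ in_index a b, in_index c d, farey_nb a b c d,
    (a + 2 * c <= b + 2 * d)%N &
    [/\ p = (a + 2 * c)%N, q = (b + 2 * d)%N, in_index (a + c) (b + d) & (1 <= d)%N]].
Proof.
move=> /andP[cop hle] hp hq.
have hpq : (p <= q)%N by case/orP: hle => // /eqP h; rewrite h in hq.
have [c [d [hd hdq hcp hdet]]] := farey_parents_coprime cop (introT andP (conj hp hpq)) hq.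
have [a ea] : exists a, p = (a + 2 * c)%N by exists (p - 2 * c)%N; lia.
have [b eb] : exists b, q = (b + 2 * d)%N by exists (q - 2 * d)%N; lia.
subst p q.
have hdet' : (a * d = b * c + 1 \/ b * c = a * d + 1)%N by case: hdet => h; [left|right]; nia.
have hcd : (c <= d)%N by case: hdet => h; nia.
have copcd : coprime c d.
  case: hdet => h; last by apply: (@coprime_det1 _ _ (b + 2 * d) (a + 2 * c)); lia.
  by rewrite coprime_sym; apply: (@coprime_det1 _ _ (a + 2 * c) (b + 2 * d)); lia.
have copab : coprime a b.
  case: hdet' => h; first by apply: (@coprime_det1 _ _ d c); lia.
  by rewrite coprime_sym; apply: (@coprime_det1 _ _ c d); lia.
have copm : coprime (a + c) (b + d).
  case: hdet' => h; first by apply: (@coprime_det1 _ _ d c); nia.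
  by rewrite coprime_sym; apply: (@coprime_det1 _ _ c d); nia.
have hab : (a <= b)%N || (b == 0)%N.
  case: (posnP b) => [-> | bpos]; first by rewrite orbT.
  apply/orP; left; case: hdet' => h; nia.
exists a, b, c, d; split => //.
- by rewrite /in_index copab hab.
- by rewrite /in_index copcd hcd.
- by rewrite /farey_nb; case: hdet' => ->; rewrite eqxx ?orbT.
- split => //; rewrite /in_index copm /=; apply/orP; left.
  case/orP: hab => [|/eqP b0]; first lia.
  by subst b; move: copab => /coprimen0_eq1 a1; subst a; lia.
Qed.

Section MarkovStep.
Variable M : nat -> nat -> RF.
Hypothesis hM : is_markov_family M.

Lemma markov_expansions_farey a b c d :
  in_index a b -> farey_nb a b c d -> (a + 2 * c <= b + 2 * d)%N -> (1 <= d)%N ->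
  M (a + 2 * c)%N (b + 2 * d)%N = (M c d ^+ 2 + M (a + c)%N (b + d)%N ^+ 2) / M a b ->
  markov_expansions M a b -> markov_expansions M c d ->
  markov_expansions M (a + c) (b + d) ->
  markov_expansions M (a + 2 * c) (b + 2 * d).
Proof.
case: hM => e10 e01 e11 _ /andP[copab hab] far hle hd er fA fC fm.
have e11' : M 1%N 1%N = SF / zF by rewrite e11.
have [a0|apos] := posnP a.
  subst a; have b1 := coprime0n_eq1 copab; subst b.
  have c1 : c = 1%N by move: far; rewrite /farey_nb; lia.
  subst c; apply: markov_expansions_of_y4; [by [] | lia | |].
    exact: (expansion_z_step_x hd fC fm e01 er).
  exact: (expansion_y_step_x hd fC fm e01 er).
have [b0|bpos] := posnP b.
  subst b; have a1 := coprimen0_eq1 copab; subst a.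
  have d1 : d = 1%N by move: far; rewrite /farey_nb; lia.
  have c0 : c = 0%N by lia.
  by subst c d; exact: (markov_expansions12 e10 e01 e11' er).
apply: markov_expansions_of_y4; [lia | lia | |].
  by apply: (expansion_z_step er fA fC fm apos bpos); lia.
have [hb1|hb1] := leqP b 1; last exact: (expansion_y_step er fA fC fm apos hb1).
have b1 : b = 1%N by lia.
subst b; have a1 : a = 1%N by move: hab; case/orP; lia.
have dc : d = (c + 1)%N by move: far hle; rewrite /farey_nb; lia.
by subst a d; exact: (expansion_y_step_S fC fm e11' er).
Qed.

Lemma markov_expansions_all p q : in_index p q -> markov_expansions M p q.
Proof.
have [e10 e01 e11 hrec] := hM.
move: (leqnn q); move: {-2}q p; elim: q => [|N IH] q p hqN hin.
  have q0 : q = 0%N by lia.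
  by subst q; move: hin => /andP[/coprimen0_eq1 -> _]; exact: markov_expansions10.
have [hq1|hq1] := leqP q 1.
  move: hin => /andP[cop hle].
  case: q hq1 hqN cop hle => [|[|//]] _ _ cop hle.
    by rewrite (coprimen0_eq1 cop); exact: markov_expansions10.
  case: p cop hle => [|[|//]] _ _; first exact: markov_expansions01.
  by apply: markov_expansions11; rewrite e11.
have hp : (1 <= p)%N.
  case: (posnP p) => [p0|//]; move: hin; rewrite p0 => /andP[cop _].
  by move: (coprime0n_eq1 cop) hq1 => ->.
have [a [b [c [d [inab incd far hle [ep eq inm hd]]]]]] := farey_parents hin hp hq1.
subst p q.
apply: markov_expansions_farey => //; first exact: hrec.
- by apply: (IH b) => //; lia.
- by apply: (IH d) => //; lia.
- by apply: (IH (b + d)%N) => //; lia.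
Qed.

End MarkovStep.

Lemma addm_eqE (k u m : 'X_{1..3}) : ((k + u)%MM == m) = (u <= m)%MM && (k == (m - u)%MM).
Proof.
apply/eqP/andP => [<-|[hu /eqP ->]]; last by rewrite submK.
by split; [exact: lem_addl | rewrite addmK].
Qed.

Lemma mcoeffMX_if (p : mpZ3) u m :
  (p * 'X_[u])@_m = if (u <= m)%MM then p@_(m - u) else 0.
Proof.
elim/mpolyind: p => [|c k p _ _ IH].
  by rewrite mul0r mcoeff0; case: ifP => //; rewrite mcoeff0.
rewrite mulrDl mcoeffD IH -scalerAl -mpolyXD mcoeffZ mcoeffX addm_eqE.
case: ifP => hu /=; last by rewrite mulr0 add0r.
by rewrite mcoeffD mcoeffZ mcoeffX.
Qed.

Lemma mcoeffXM_if (p : mpZ3) u m :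
  ('X_[u] * p)@_m = if (u <= m)%MM then p@_(m - u) else 0.
Proof. by rewrite mulrC mcoeffMX_if. Qed.

Lemma ev0_mpolyX i (m : 'X_{1..3}) :
  ev0 i 'X_[m] = if (m i == 0)%N then 'X_[m] else 0.
Proof.
rewrite /ev0 comp_mpolyX.
case: eqP => hm.
  rewrite [RHS]mpolyXE_id; apply: eq_bigr => j _.
  rewrite tnth_mktuple; case: eqP => [->|//].
  by rewrite hm !expr0.
rewrite (bigD1 i) //= tnth_mktuple eqxx expr0n.
by move/eqP/negbTE: hm => ->; rewrite mul0r.
Qed.

Lemma mpolyX_split i (m : 'X_{1..3}) : (0 < m i)%N -> 'X_[m] = 'X_i * 'X_[m - U_(i)] :> mpZ3.
Proof.
move=> h; rewrite -mpolyXD addmC submK //.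
by apply/mnm_lepP => j; rewrite mnm1E; case: eqP => [<-|_].
Qed.

Lemma ev0_decomp i (h : mpZ3) : exists h', h = ev0 i h + 'X_i * h'.
Proof.
elim/mpolyind: h => [|c m p _ _ [p' IH]].
  by exists 0; rewrite /ev0 raddf0 mulr0 addr0.
have [e0|epos] := posnP (m i).
  exists p'; rewrite /ev0 raddfD /= -/(ev0 i p) linearZ /= -/(ev0 i 'X_[m]) ev0_mpolyX e0 eqxx.
  by rewrite {1}IH addrA.
exists (c *: 'X_[m - U_(i)] + p').
rewrite /ev0 raddfD /= -/(ev0 i p) linearZ /= -/(ev0 i 'X_[m]) ev0_mpolyX.
rewrite (negbTE (lt0n_neq0 epos)) scaler0 add0r {1}IH {1}(mpolyX_split epos).
rewrite mulrDr -scalerAr; ring.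
Qed.

Lemma mcoeffXUM i (h : mpZ3) (m : 'X_{1..3}) :
  ('X_i * h)@_m = if (0 < m i)%N then h@_(m - U_(i)) else 0.
Proof.
rewrite mcoeffXM_if.
have -> : (U_(i) <= m)%MM = (0 < m i)%N.
  apply/mnm_lepP/idP => [/(_ i)|h0 j]; first by rewrite mnm1E eqxx.
  by rewrite mnm1E; case: eqP => [<-|_].
by [].
Qed.

Lemma mcoeff_eq0_low i k (h q p : mpZ3) :
  ev0 i q != 0 -> h * q = 'X_i ^+ k * p -> forall m : 'X_{1..3}, (m i < k)%N -> h@_m = 0.
Proof.
elim: k h p => [//|k IH] h p hq e m hm.
have evh : ev0 i h = 0.
  have : ev0 i h * ev0 i q = 0 by rewrite -ev0M e ev0M ev0X ev0_Xi expr0n mul0r.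
  by move/eqP; rewrite mulf_eq0 (negbTE hq) orbF => /eqP.
have [h' eh] := ev0_decomp i h.
rewrite evh add0r in eh.
have e' : h' * q = 'X_i ^+ k * p.
  apply: (mulfI (mpolyXU_neq0 i)); rewrite mulrA -eh e exprS; ring.
rewrite eh mcoeffXUM; case: ifP => // hpos.
apply: (IH h' p hq e') => //.
by rewrite mnmBE mnm1E eqxx; lia.
Qed.

Definition sq_tuple : 3.-tuple mpZ3 :=
  [tuple ('X_0 : mpZ3) ^+ 2; ('X_1 : mpZ3) ^+ 2; ('X_2 : mpZ3) ^+ 2].

Lemma sq_substE P : sq_subst P = toRF (P \mPo sq_tuple). Proof. by []. Qed.

Lemma tnth_sq_tuple (i : 'I_3) : tnth sq_tuple i = 'X_i ^+ 2.
Proof. by case: i => [[|[|[|//]]] hi] //=; congr ('X__ ^+ 2); apply: val_inj. Qed.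

Lemma comp_sq_mpolyX (k : 'X_{1..3}) : 'X_[k] \mPo sq_tuple = 'X_[(k + k)%MM].
Proof.
rewrite comp_mpolyX [RHS]mpolyXE_id; apply: eq_bigr => i _.
by rewrite tnth_sq_tuple -exprM mnmDE mul2n -addnn.
Qed.

Lemma eq_addmm (k m : 'X_{1..3}) : ((k + k)%MM == (m + m)%MM) = (k == m).
Proof.
apply/eqP/eqP => [h|->//]; apply/mnmP => i.
by have := congr1 (fun t : 'X_{1..3} => t i) h; rewrite /= !mnmDE; lia.
Qed.

Lemma mcoeff_comp_sq (Q : mpZ3) m : (Q \mPo sq_tuple)@_(m + m)%MM = Q@_m.
Proof.
elim/mpolyind: Q => [|c k p _ _ IH]; first by rewrite raddf0 !mcoeff0.
rewrite raddfD /= mcoeffD IH comp_mpolyZ comp_sq_mpolyX !mcoeffD !mcoeffZ !mcoeffX.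
by rewrite eq_addmm.
Qed.

Definition mk3 (i j k : nat) : 'X_{1..3} := [multinom [tuple i; j; k]].

Lemma mk3E0 i j k : mk3 i j k ix = i. Proof. by rewrite /mk3 multinomE. Qed.
Lemma mk3E1 i j k : mk3 i j k iy = j. Proof. by rewrite /mk3 multinomE. Qed.
Lemma mk3E2 i j k : mk3 i j k iz = k. Proof. by rewrite /mk3 multinomE. Qed.

Lemma mk3P (m : 'X_{1..3}) i j k : m ix = i -> m iy = j -> m iz = k -> m = mk3 i j k.
Proof.
move=> h0 h1 h2; apply/mnmP => t; rewrite /mk3 multinomE.
case: t => [[|[|[|//]]] ht].
- by rewrite (tnth_nth 0%N) /= -h0; congr (m _); apply: val_inj.
- by rewrite (tnth_nth 0%N) /= -h1; congr (m _); apply: val_inj.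
- by rewrite (tnth_nth 0%N) /= -h2; congr (m _); apply: val_inj.
Qed.

Lemma mk3_eq0 i j k : (mk3 i j k == 0%MM) = [&& i == 0, j == 0 & k == 0]%N.
Proof.
apply/eqP/and3P => [h|[/eqP -> /eqP -> /eqP ->]]; last by apply/esym/mk3P; rewrite mnm0E.
have := congr1 (fun t : 'X_{1..3} => t ix) h; have := congr1 (fun t : 'X_{1..3} => t iy) h.
have := congr1 (fun t : 'X_{1..3} => t iz) h.
by rewrite /= mk3E0 mk3E1 mk3E2 !mnm0E => -> -> ->.
Qed.

Lemma mcoeffX0M (p : mpZ3) i j k :
  ('X_ix * p)@_(mk3 i j k) = if i is i'.+1 then p@_(mk3 i' j k) else 0.
Proof.
rewrite mcoeffXUM mk3E0; case: i => [//|i] /=; congr (p@__).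
by apply: mk3P; rewrite mnmBE mnm1E ?mk3E0 ?mk3E1 ?mk3E2 //=; lia.
Qed.

Lemma mcoeffX1M (p : mpZ3) i j k :
  ('X_iy * p)@_(mk3 i j k) = if j is j'.+1 then p@_(mk3 i j' k) else 0.
Proof.
rewrite mcoeffXUM mk3E1; case: j => [//|j] /=; congr (p@__).
by apply: mk3P; rewrite mnmBE mnm1E ?mk3E0 ?mk3E1 ?mk3E2 //=; lia.
Qed.

Lemma mcoeffX2M (p : mpZ3) i j k :
  ('X_iz * p)@_(mk3 i j k) = if k is k'.+1 then p@_(mk3 i j k') else 0.
Proof.
rewrite mcoeffXUM mk3E2; case: k => [//|k] /=; congr (p@__).
by apply: mk3P; rewrite mnmBE mnm1E ?mk3E0 ?mk3E1 ?mk3E2 //=; lia.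
Qed.

Lemma mcoeff1_mk3 i j k : (1 : mpZ3)@_(mk3 i j k) = ([&& i == 0, j == 0 & k == 0]%N)%:R.
Proof. by rewrite mcoeff1 mk3_eq0. Qed.

Lemma mcoeff_binomial01 N i j k : (('X_ix + 'X_iy : mpZ3) ^+ N)@_(mk3 i j k) =
  if ((k == 0) && (i + j == N))%N then ('C(N, i))%:R else 0.
Proof.
elim: N i j k => [|N IH] i j k.
  rewrite expr0 mcoeff1_mk3.
  by case: i => [|i]; case: j => [|j]; case: k => [|k].
rewrite exprS mulrDl mcoeffD mcoeffX0M mcoeffX1M.
case: i => [|i]; case: j => [|j].
- by rewrite add0r; case: (k == 0%N).
- rewrite IH add0r; case: (k == 0%N) => //=.
  by rewrite add0n eqSS !bin0.
- rewrite IH addr0; case: (k == 0%N) => //=.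
  rewrite !addn0 eqSS; case: eqP => // ->; by rewrite !binn.
- rewrite !IH; case: (k == 0%N) => /=; last by rewrite addr0.
  rewrite !addSn !addnS eqSS.
  case: ifP => _; last by rewrite addr0.
  by rewrite binS natrD addrC.
Qed.

Lemma mcoeff_binomial02 N i j k : (('X_ix + 'X_iz : mpZ3) ^+ N)@_(mk3 i j k) =
  if ((j == 0) && (i + k == N))%N then ('C(N, i))%:R else 0.
Proof.
elim: N i j k => [|N IH] i j k.
  rewrite expr0 mcoeff1_mk3.
  by case: i => [|i]; case: j => [|j]; case: k => [|k].
rewrite exprS mulrDl mcoeffD mcoeffX0M mcoeffX2M.
case: i => [|i]; case: k => [|k].
- by rewrite add0r; case: (j == 0%N).
- rewrite IH add0r; case: (j == 0%N) => //=.
  by rewrite add0n eqSS !bin0.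
- rewrite IH addr0; case: (j == 0%N) => //=.
  rewrite !addn0 eqSS; case: eqP => // ->; by rewrite !binn.
- rewrite !IH; case: (j == 0%N) => /=; last by rewrite addr0.
  rewrite !addSn !addnS eqSS.
  case: ifP => _; last by rewrite addr0.
  by rewrite binS natrD addrC.
Qed.

Lemma mcoeffX0nM a (p : mpZ3) i j k :
  ('X_ix ^+ a * p)@_(mk3 i j k) = if (a <= i)%N then p@_(mk3 (i - a) j k) else 0.
Proof.
elim: a i => [|a IH] i; first by rewrite expr0 mul1r subn0.
rewrite exprS -mulrA mcoeffX0M; case: i => [//|i].
by rewrite IH ltnS subSS.
Qed.

(* P_{a/b} modulo w^2. *)
Definition Gz (a b : nat) : mpZ3 :=
  ('X_ix + 'X_iy) ^+ (a + b - 1) +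
  'X_iz * (('X_ix + 'X_iy) ^+ (a + b - 3) * ('X_ix *+ (b - 1) + 'X_iy *+ (a - 1))).

Lemma sq_substD p q : sq_subst (p + q) = sq_subst p + sq_subst q.
Proof. by rewrite /sq_subst rmorphD toRFD. Qed.
Lemma sq_substM p q : sq_subst (p * q) = sq_subst p * sq_subst q.
Proof. by rewrite /sq_subst rmorphM toRFM. Qed.
Lemma sq_substX p k : sq_subst (p ^+ k) = sq_subst p ^+ k.
Proof. by rewrite /sq_subst rmorphXn toRFX. Qed.
Lemma sq_substMn p k : sq_subst (p *+ k) = sq_subst p * k%:R.
Proof. by rewrite /sq_subst rmorphMn /toRF rmorphMn mulr_natr. Qed.
Lemma sq_substX0 : sq_subst 'X_ix = xF ^+ 2.
Proof. by rewrite /sq_subst comp_mpolyXU /= toRFX. Qed.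
Lemma sq_substX1 : sq_subst 'X_iy = yF ^+ 2.
Proof. by rewrite /sq_subst comp_mpolyXU /= toRFX. Qed.
Lemma sq_substX2 : sq_subst 'X_iz = zF ^+ 2.
Proof. by rewrite /sq_subst comp_mpolyXU /= toRFX. Qed.

Lemma sq_subst_Gz a b : sq_subst (Gz a b) =
  SF ^+ (a + b - 1) + zF ^+ 2 * (SF ^+ (a + b - 3) * (xF ^+ 2 * (b - 1)%:R + yF ^+ 2 * (a - 1)%:R)).
Proof.
by rewrite /Gz !(sq_substD, sq_substM, sq_substX, sq_substMn, sq_substX0, sq_substX1,
  sq_substX2).
Qed.

(* P_{a/b} modulo v^2, for b >= 3. *)
Definition Gy (a b : nat) : mpZ3 :=
  'X_ix ^+ a * ('X_ix + 'X_iz) ^+ (b - 1) +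
  'X_iy * ('X_ix ^+ a * ('X_ix + 'X_iz) ^+ (b - 3) *
           ('X_ix *+ (a + b - 1) + 'X_iz *+ (3 * a - 1))).

Lemma sq_subst_Gy a b : sq_subst (Gy a b) =
  (xF ^+ 2) ^+ a * TF ^+ (b - 1) + yF ^+ 2 * ((xF ^+ 2) ^+ a * TF ^+ (b - 3) *
     (xF ^+ 2 * (a + b - 1)%:R + zF ^+ 2 * (3 * a - 1)%:R)).
Proof.
by rewrite /Gy !(sq_substD, sq_substM, sq_substX, sq_substMn, sq_substX0, sq_substX1,
  sq_substX2).
Qed.

Lemma mcoeff_eq_of_vanishes i (P G : mpZ3) k0 :
  vanishes i k0 (toRF (P \mPo sq_tuple) - toRF (G \mPo sq_tuple)) ->
  forall m : 'X_{1..3}, (m i + m i < k0)%N -> P@_m = G@_m.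
Proof.
move=> [p [q [hq e]]] m hm.
rewrite -toRFB -toRFM in e; have e' := toRF_inj e.
have := mcoeff_eq0_low hq e' (m := (m + m)%MM); rewrite mnmDE => /(_ hm).
by rewrite mcoeffB !mcoeff_comp_sq => /eqP; rewrite subr_eq0 => /eqP.
Qed.

Lemma Pz_remainder_identity (F : fieldType) (M x y z sP be al : F) A B N :
  x != 0 -> y != 0 -> z != 0 -> x ^+ 2 + y ^+ 2 != 0 ->
  M = sP / (x ^+ A * y ^+ B * z ^+ (N + 2)) ->
  sP - ((x ^+ 2 + y ^+ 2) ^+ (N + 2)
        + z ^+ 2 * ((x ^+ 2 + y ^+ 2) ^+ N * (x ^+ 2 * be + y ^+ 2 * al)))
  = (M * (z ^+ (N + 2) * x ^+ A * y ^+ B * ((x ^+ 2 + y ^+ 2) ^+ (N + 2))^-1) - 1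
      - z ^+ 2 * ((be * x ^+ 2 + al * y ^+ 2) / (x ^+ 2 + y ^+ 2) ^+ 2))
    * (x ^+ 2 + y ^+ 2) ^+ (N + 2).
Proof. by move=> hx hy hz hS ->; rewrite !exprD; field_nz. Qed.

Lemma Py_remainder_identity (F : fieldType) (M x y z sP g ga : F) a A B n : a = (A + 1)%N ->
  x != 0 -> y != 0 -> z != 0 -> x ^+ 2 + z ^+ 2 != 0 ->
  M = sP / (x ^+ A * y ^+ (B + 2) * z ^+ n) ->
  sP - ((x ^+ 2) ^+ a * (x ^+ 2 + z ^+ 2) ^+ (B + 2) + y ^+ 2 * ((x ^+ 2) ^+ a *
      (x ^+ 2 + z ^+ 2) ^+ B * (x ^+ 2 * g + z ^+ 2 * ga)))
  = (M * (y ^+ (B + 2) * z ^+ n * (x ^+ a.+1)^-1 * ((x ^+ 2 + z ^+ 2) ^+ (B + 2))^-1) - 1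
      - y ^+ 2 * ((g * x ^+ 2 + ga * z ^+ 2) / (x ^+ 2 + z ^+ 2) ^+ 2))
    * ((x ^+ 2) ^+ a * (x ^+ 2 + z ^+ 2) ^+ (B + 2)).
Proof.
move=> -> hx hy hz hT ->.
rewrite -exprM (_ : (2 * (A + 1) = A + (A + 1).+1)%N); last by lia.
rewrite !exprD; field_nz.
Qed.

Lemma mcoeff_P_low_w (M : nat -> nat -> RF) a b P : (1 <= a)%N -> (2 <= b)%N ->
  M a b = sq_subst P / (xF ^+ (a - 1) * yF ^+ (b - 1) * zF ^+ (a + b - 1)) ->
  vanishes iz 4 (M a b * wz a b - 1 - zF ^+ 2 * ez a b) ->
  forall m : 'X_{1..3}, (m iz <= 1)%N -> P@_m = (Gz a b)@_m.
Proof.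
move=> ha hb hM sz m hm.
apply: (mcoeff_eq_of_vanishes (i := iz) (k0 := 4)); last by lia.
have en : (a + b - 1 = (a + b - 3) + 2)%N by lia.
rewrite -!sq_substE sq_subst_Gz en; rewrite en in hM.
move: sz; rewrite /wz /ez /degP en => sz.
rewrite /SF (@Pz_remainder_identity _ (M a b) xF yF zF (sq_subst P)
  (b - 1)%:R (a - 1)%:R (a - 1) (b - 1) (a + b - 3) xF_neq0 yF_neq0 zF_neq0 SF_neq0 hM).
apply: (@vanishesMW _ 4 0 4) => //.
by apply: vanishes0X; exact: vanishes0_S.
Qed.

Lemma mcoeff_P_low_v (M : nat -> nat -> RF) a b P : (1 <= a)%N -> (3 <= b)%N ->
  M a b = sq_subst P / (xF ^+ (a - 1) * yF ^+ (b - 1) * zF ^+ (a + b - 1)) ->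
  vanishes iy 4 (M a b * wy a b - 1 - yF ^+ 2 * fy a b) ->
  forall m : 'X_{1..3}, (m iy <= 1)%N -> P@_m = (Gy a b)@_m.
Proof.
move=> ha hb hM sy m hm.
apply: (mcoeff_eq_of_vanishes (i := iy) (k0 := 4)); last by lia.
have eb : (b - 1 = (b - 3) + 2)%N by lia.
have ea : a = ((a - 1) + 1)%N by lia.
rewrite -!sq_substE sq_subst_Gy eb; rewrite eb in hM.
move: sy; rewrite /wy /fy /degP eb => sy.
rewrite /TF (@Py_remainder_identity _ (M a b) xF yF zF (sq_subst P)
  (a + b - 1)%:R (3 * a - 1)%:R a (a - 1) (b - 3) (a + b - 1)
  ea xF_neq0 yF_neq0 zF_neq0 TF_neq0 hM).
apply: (@vanishesMW _ 4 0 4) => //.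
by apply: (@vanishesMW _ 0 0 0) => //; apply: vanishes0X;
  [exact/vanishes0X/vanishes0_x | exact: vanishes0_T].
Qed.

Local Open Scope nat_scope.

Lemma amgm_nat (u v X : nat) : u + v = 2 * X -> u * v <= X ^ 2.
Proof.
wlog huv : u v / u <= v.
  move=> H h; case: (leqP u v) => c; first exact: H.
  by rewrite mulnC; apply: H; lia.
move=> h.
have eV : v = u + 2 * (X - u) by lia.
have eX : X = u + (X - u) by lia.
by rewrite eV {2}eX expnS expn1; nia.
Qed.

Lemma ltn_mul_logconcave (b0 b1 b2 l0 l1 l2 : nat) :
  b0 * b2 < b1 ^ 2 -> l0 * l2 <= l1 ^ 2 -> 0 < l1 ->
  (b0 * l0) * (b2 * l2) < (b1 * l1) ^ 2.
Proof.
move=> hb hl hl1; apply: (@leq_ltn_trans (b0 * b2 * l1 ^ 2)).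
  by rewrite mulnACA leq_mul2l hl orbT.
by rewrite expnMn ltn_pmul2r // expn_gt0 hl1.
Qed.

Lemma binomial_logconcave M K : 1 <= K -> K < M ->
  'C(M, K.-1) * 'C(M, K.+1) < 'C(M, K) ^ 2.
Proof.
move=> h1 h2.
have hB : 0 < 'C(M, K) by rewrite bin_gt0; lia.
have e1 : 'C(M, K.-1) * (M - K.-1) = 'C(M, K) * K.
  case: K h1 h2 hB => [//|K] _ h2 hB /=.
  by rewrite [LHS]mulnC -mul_bin_left mulnC.
have e2 : 'C(M, K.+1) * K.+1 = 'C(M, K) * (M - K).
  by rewrite mulnC mul_bin_left mulnC.
rewrite -(ltn_pmul2r (_ : 0 < (M - K.-1) * K.+1)); last by nia.
rewrite mulnACA e1 e2 mulnACA mulnn ltn_pmul2l ?expn_gt0 ?hB //.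
nia.
Qed.

Definition lcoef (N al be K : nat) : nat :=
  (if K is K'.+1 then be * 'C(N, K') else 0) + al * 'C(N, K).

Definition lcoef_pred (N al be K : nat) : nat :=
  if K is K'.+1 then lcoef N al be K' else 0.

Lemma lcoef_binomial N al be K :
  N.+1 * lcoef N al be K = 'C(N.+1, K) * (be * K + al * (N.+1 - K)).
Proof.
rewrite /lcoef mulnDr.
have h2 : N.+1 * 'C(N, K) = (N.+1 - K) * 'C(N.+1, K) by rewrite -mul_bin_down.
case: K h2 => [|K] h2; first by rewrite /= !bin0; lia.
have h1 : N.+1 * 'C(N, K) = K.+1 * 'C(N.+1, K.+1) by rewrite -mul_bin_diag.
by rewrite /= mulnDr !(mulnCA N.+1) h1 h2; nia.
Qed.

Lemma affine_logconcave al be N K : K.+2 <= N ->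
  (be * K + al * (N - K)) * (be * K.+2 + al * (N - K.+2))
    <= (be * K.+1 + al * (N - K.+1)) ^ 2.
Proof.
move=> hK; apply: amgm_nat.
have [d ed] : exists d, N - K = d.+2 by exists (N - K - 2); lia.
have -> : N - K.+1 = d.+1 by lia.
have -> : N - K.+2 = d by lia.
by rewrite ed; lia.
Qed.

(* N.+1 * lcoef is a binomial coefficient (strictly log-concave) times an
   affine function of K (log-concave). *)
Lemma lcoef_logconcave N al be K : 0 < lcoef N al be K ->
  lcoef_pred N al be K * lcoef N al be K.+1 < lcoef N al be K ^ 2.
Proof.
case: K => [|K] hpos; first by rewrite /lcoef_pred mul0n expn_gt0 hpos.
have [hK|hK] := leqP K.+2 N.+1; last first.
  rewrite (_ : lcoef N al be K.+2 = 0); first by rewrite muln0 expn_gt0 hpos.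
  by rewrite /lcoef /= !bin_small; lia.
have hL : 0 < be * K.+1 + al * (N.+1 - K.+1).
  have : 0 < N.+1 * lcoef N al be K.+1 by rewrite muln_gt0 hpos.
  by rewrite lcoef_binomial muln_gt0 => /andP[].
rewrite -(ltn_pmul2l (_ : 0 < N.+1 ^ 2)) ?expn_gt0 // /lcoef_pred.
have -> : N.+1 ^ 2 * (lcoef N al be K * lcoef N al be K.+2) =
    (N.+1 * lcoef N al be K) * (N.+1 * lcoef N al be K.+2) by rewrite mulnACA mulnn.
rewrite -expnMn !lcoef_binomial.
apply: ltn_mul_logconcave => //; last exact: affine_logconcave.
exact: (@binomial_logconcave N.+1 K.+1).
Qed.

Lemma lcoef_gt0 N al be K : (K <= N.+1)%N -> (0 < K)%N || (0 < al)%N -> (0 < be)%N ->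
  (0 < lcoef N al be K)%N.
Proof.
move=> hK h hb; rewrite /lcoef.
case: K hK h => [|K] hK h /=.
  by rewrite add0n muln_gt0 bin0 andbT; rewrite ltnn in h.
rewrite addn_gt0 muln_gt0 hb bin_gt0 /=; lia.
Qed.

Local Open Scope ring_scope.

Ltac natr_congr := rewrite ?mul0rn -?mulrnA ?add0r ?addr0 -?natrD; congr (_%:R); nia.

Lemma mcoeff_Gz_w1 a b I J : (1 <= a)%N -> (2 <= b)%N -> (I + J + 1 = a + b - 1)%N ->
  (Gz a b)@_(mk3 I J 1) = (lcoef (a + b - 3) (a - 1) (b - 1) I)%:R.
Proof.
move=> ha hb e.
rewrite /Gz mcoeffD mcoeff_binomial01 /= add0r mcoeffX2M mulrDr !mulrnAr mcoeffD !mcoeffMn.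
rewrite (mulrC _ 'X_ix) (mulrC _ 'X_iy) mcoeffX0M mcoeffX1M /lcoef.
case: I e => [|I] e; case: J e => [|J] e /=.
- lia.
- rewrite !mcoeff_binomial01 /= (_ : (0 + J == a + b - 3)%N = true); last by apply/eqP; lia.
  natr_congr.
- rewrite !mcoeff_binomial01 /= (_ : (I + 0 == a + b - 3)%N = true); last by apply/eqP; lia.
  rewrite (@bin_small (a + b - 3) I.+1); last by lia.
  natr_congr.
- rewrite !mcoeff_binomial01 /= (_ : (I + J.+1 == a + b - 3)%N = true); last by apply/eqP; lia.
  rewrite (_ : (I.+1 + J == a + b - 3)%N = true); last by apply/eqP; lia.
  natr_congr.
Qed.

Lemma mcoeff_Gz_w0 a b I J : (I + J = a + b - 1)%N ->
  (Gz a b)@_(mk3 I J 0) = ('C(a + b - 1, I))%:R.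
Proof.
move=> e; rewrite /Gz mcoeffD mcoeff_binomial01 /= mcoeffX2M addr0.
by rewrite (_ : (I + J == a + b - 1)%N = true) //; apply/eqP.
Qed.

Lemma mcoeff_Gy_v1 a b I K : (1 <= a)%N -> (3 <= b)%N -> (I + 1 + K = a + b - 1)%N ->
  (Gy a b)@_(mk3 I 1 K) =
    if (a <= I)%N then (lcoef (b - 3) (3 * a - 1) (a + b - 1) (I - a))%:R else 0.
Proof.
move=> ha hb e.
rewrite /Gy mcoeffD mcoeffX0nM.
rewrite (_ : (if (a <= I)%N then (('X_ix + 'X_iz) ^+ (b - 1))@_(mk3 (I - a) 1 K) else 0)
  = 0); last first.
  by case: ifP => // _; rewrite mcoeff_binomial02.
rewrite add0r mcoeffX1M -mulrA mcoeffX0nM; case: ifP => // haI.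
rewrite mulrDr !mulrnAr mcoeffD !mcoeffMn (mulrC _ 'X_ix) (mulrC _ 'X_iz).
rewrite mcoeffX0M mcoeffX2M /lcoef.
case hK : (I - a)%N => [|K'].
- case: K e hK => [|K] e hK /=; first lia.
  rewrite mcoeff_binomial02 /= (_ : (0 + K == b - 3)%N = true); last by apply/eqP; lia.
  natr_congr.
- case: K e hK => [|K] e hK /=.
  + rewrite mcoeff_binomial02 /= (_ : (K' + 0 == b - 3)%N = true); last by apply/eqP; lia.
    rewrite (@bin_small (b - 3) K'.+1); last by lia.
    natr_congr.
  + rewrite !mcoeff_binomial02 /= (_ : (K' + K.+1 == b - 3)%N = true); last by apply/eqP; lia.
    rewrite (_ : (K'.+1 + K == b - 3)%N = true); last by apply/eqP; lia.
    natr_congr.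
Qed.

Lemma coefA_nat n P (I J : nat) :
  coefA n P I J = if (I + J <= n)%N then P@_(mk3 I J (n - I - J)) else 0.
Proof.
rewrite /coefA.
have -> : ((0 <= I%:Z) && (0 <= J%:Z) && (I%:Z + J%:Z <= n%:Z)) = (I + J <= n)%N.
  by apply/idP/idP; lia.
by [].
Qed.

Lemma coefA_neg n P i j : (i < 0) || (j < 0) -> coefA n P i j = 0.
Proof.
move=> h; rewrite /coefA; case: ifP => // /andP[/andP[h1 h2] _].
by move: h; lia.
Qed.

Lemma PoszS1 (I : nat) : (I.+1%:Z - 1 = I%:Z)%R. Proof. lia. Qed.
Lemma PoszP1 (I : nat) : (I%:Z + 1 = I.+1%:Z)%R. Proof. lia. Qed.

Lemma in_Delta_nat a b (I J : nat) : (0 < a)%N -> (0 < b)%N ->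
  in_Delta a b I J = (a * b <= I * b + J * a)%N && (I + J <= a + b - 1)%N.
Proof.
move=> ha hb; rewrite /in_Delta.
have -> : ((I%:Z)%:~R / a%:R + (J%:Z)%:~R / b%:R : rat) = (I * b + J * a)%:R / (a * b)%:R.
  rewrite -[(I%:Z)%:~R]/(I%:R : rat) -[(J%:Z)%:~R]/(J%:R : rat) natrD !natrM.
  have ha' : (a%:R : rat) != 0 by rewrite pnatr_eq0 -lt0n.
  have hb' : (b%:R : rat) != 0 by rewrite pnatr_eq0 -lt0n.
  by field; rewrite ha' hb'.
rewrite ler_pdivlMr; last by rewrite ltr0n muln_gt0 ha hb.
rewrite mul1r ler_nat.
have -> : (I%:Z + J%:Z <= (a + b)%:Z - 1) = (I + J <= a + b - 1)%N by apply/idP/idP; lia.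
by rewrite le0z_nat.
Qed.

Lemma ltr_mul_sqr_nat (x y z : nat) (w : int) : (0 < y)%N -> (x * z < y ^ 2)%N ->
  (w = z%:R \/ w = 0) -> (x%:R * w < (y%:R) ^+ 2 :> int).
Proof.
move=> hy h [->|->].
  by rewrite -natrM -natrX ltr_nat.
by rewrite mulr0 exprn_gt0 // ltr0n.
Qed.

Lemma coefA_antidiagonal a b (P : mpZ3) (I J : nat) : (1 <= a)%N -> (2 <= b)%N ->
  (forall m : 'X_{1..3}, (m iz <= 1)%N -> P@_m = (Gz a b)@_m) ->
  (I + J = a + b - 2)%N ->
  coefA (a + b - 1) P I J = (lcoef (a + b - 3) (a - 1) (b - 1) I)%:R.
Proof.
move=> ha hb hZ hIJ.
rewrite coefA_nat (_ : (I + J <= a + b - 1)%N = true); last by lia.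
rewrite (_ : (a + b - 1 - I - J = 1)%N); last by lia.
by rewrite hZ ?mk3E2 // mcoeff_Gz_w1 //; lia.
Qed.

Lemma logconcave_antidiagonal a b (P : mpZ3) : (1 <= a)%N -> (2 <= b)%N ->
  (forall m : 'X_{1..3}, (m iz <= 1)%N -> P@_m = (Gz a b)@_m) ->
  forall i j : int, in_Delta a b i j -> i + j = (a + b)%:Z - 2 ->
     coefA (a + b - 1) P i j ^+ 2
       > coefA (a + b - 1) P (i - 1) (j + 1) * coefA (a + b - 1) P (i + 1) (j - 1).
Proof.
move=> ha hb hZ [I|I] [J|J] hD hij; try by move: hD; rewrite /in_Delta; lia.
move: hD; rewrite in_Delta_nat; [|lia|lia] => /andP[hD1 hD2].
have hIJ : (I + J = a + b - 2)%N by lia.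
have cm : coefA (a + b - 1) P (I%:Z - 1) (J%:Z + 1)
          = (lcoef_pred (a + b - 3) (a - 1) (b - 1) I)%:R.
  case: I {hD1 hD2 hij} hIJ => [|I] hIJ; first by rewrite coefA_neg //; lia.
  by rewrite PoszS1 PoszP1 (coefA_antidiagonal ha hb hZ) //; lia.
have cp : coefA (a + b - 1) P (I%:Z + 1) (J%:Z - 1)
          = (lcoef (a + b - 3) (a - 1) (b - 1) I.+1)%:R
          \/ coefA (a + b - 1) P (I%:Z + 1) (J%:Z - 1) = 0.
  case: J {hD1 hD2 hij cm} hIJ => [|J] hIJ; first by right; rewrite coefA_neg //; lia.
  by left; rewrite PoszS1 PoszP1 (coefA_antidiagonal ha hb hZ) //; lia.
have hpos : (0 < lcoef (a + b - 3) (a - 1) (b - 1) I)%N.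
  apply: lcoef_gt0; [lia | | lia].
  have [I0|hI0] := posnP I; last by apply/orP; left.
  by apply/orP; right; subst I; move: hD1; nia.
rewrite (coefA_antidiagonal ha hb hZ hIJ) cm.
by apply: ltr_mul_sqr_nat cp; [exact: hpos | exact: lcoef_logconcave].
Qed.

Lemma coefA_row1 a b (P : mpZ3) (I : nat) : (1 <= a)%N -> (3 <= b)%N ->
  (forall m : 'X_{1..3}, (m iy <= 1)%N -> P@_m = (Gy a b)@_m) ->
  (I + 1 <= a + b - 1)%N ->
  coefA (a + b - 1) P I 1 =
    if (a <= I)%N then (lcoef (b - 3) (3 * a - 1) (a + b - 1) (I - a))%:R else 0.
Proof.
move=> ha hb hY hI.
by rewrite coefA_nat hI hY ?mk3E1 // mcoeff_Gy_v1 //; lia.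
Qed.

Lemma logconcave_row1 a b (P : mpZ3) : (1 <= a)%N -> (a < b)%N -> (3 <= b)%N ->
  (forall m : 'X_{1..3}, (m iy <= 1)%N -> P@_m = (Gy a b)@_m) ->
  forall i : int, in_Delta a b i 1 ->
     coefA (a + b - 1) P i 1 ^+ 2
       > coefA (a + b - 1) P (i - 1) 1 * coefA (a + b - 1) P (i + 1) 1.
Proof.
move=> ha hab hb hY [I|I]; last by rewrite /in_Delta; lia.
rewrite in_Delta_nat; [|lia|lia] => /andP[hD1 hD2].
have haI : (a <= I)%N.
  rewrite leqNgt; apply/negP => hI.
  have : (I * b <= (a - 1) * b)%N by apply: leq_mul; lia.
  by nia.
set N := (b - 3)%N; set al := (3 * a - 1)%N; set be := (a + b - 1)%N.
have cI : coefA (a + b - 1) P I 1 = (lcoef N al be (I - a))%:R.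
  by rewrite coefA_row1 // haI.
have cm : coefA (a + b - 1) P (I%:Z - 1) 1 = (lcoef_pred N al be (I - a))%:R.
  case: I hD1 hD2 haI {cI} => [|I] hD1 hD2 haI; first by lia.
  rewrite PoszS1 coefA_row1 //; last by lia.
  case: ifP => hai; first by rewrite (_ : (I.+1 - a = (I - a).+1)%N) //; lia.
  by rewrite (_ : (I.+1 - a = 0)%N) //; lia.
have cp : coefA (a + b - 1) P (I%:Z + 1) 1 = (lcoef N al be (I - a).+1)%:R
          \/ coefA (a + b - 1) P (I%:Z + 1) 1 = 0.
  rewrite PoszP1; have [hle|hgt] := leqP (I.+1 + 1) (a + b - 1); last first.
    by right; rewrite coefA_nat leqNgt hgt.
  left; rewrite coefA_row1 // (_ : (a <= I.+1)%N = true); last by lia.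
  by rewrite (_ : (I.+1 - a = (I - a).+1)%N) //; lia.
have hpos : (0 < lcoef N al be (I - a))%N by apply: lcoef_gt0; rewrite /N /al /be; lia.
rewrite cI cm.
by apply: ltr_mul_sqr_nat cp; [exact: hpos | exact: lcoef_logconcave].
Qed.
Lemma markov11_numerator (F : fieldType) (sP x y z : F) : z != 0 ->
  (x ^+ 2 + y ^+ 2) / z = sP / (x ^+ 0 * y ^+ 0 * z ^+ 1) -> sP = x ^+ 2 + y ^+ 2.
Proof.
move=> hz e.
have : sP = (sP / (x ^+ 0 * y ^+ 0 * z ^+ 1)) * z by field_nz.
by rewrite -e => ->; field_nz.
Qed.

Lemma mcoeff_P11_v (M : nat -> nat -> RF) (P : mpZ3) : is_markov_family M ->
  M 1%N 1%N = sq_subst P / (xF ^+ 0 * yF ^+ 0 * zF ^+ 1) -> P@_(mk3 0 1 0) = 1.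
Proof.
case=> _ _ e11 _ hP; rewrite e11 in hP.
have eP := markov11_numerator zF_neq0 hP.
rewrite (@mcoeff_eq_of_vanishes iz P ('X_ix + 'X_iy) 2) ?mk3E2 //.
  rewrite (_ : mk3 0 1 0 = U_(iy)%MM); last by apply/esym/mk3P; rewrite mnm1E.
  by rewrite mcoeffD !mcoeffXU.
rewrite -!sq_substE eP sq_substD sq_substX0 sq_substX1 subrr.
exact: vanishes0.
Qed.

Lemma logconcave_row1_11 (P : mpZ3) : P@_(mk3 0 1 0) = 1 ->
  forall i : int, in_Delta 1 1 i 1 ->
    coefA 1 P i 1 ^+ 2 > coefA 1 P (i - 1) 1 * coefA 1 P (i + 1) 1.
Proof.
move=> c010 [I|I]; last by rewrite /in_Delta; lia.
rewrite in_Delta_nat // => hD; have -> : I = 0%N by lia.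
rewrite coefA_neg; last by lia.
by rewrite mul0r coefA_nat /= c010 expr1n ltr01.
Qed.

Lemma logconcave_row1_12 (P : mpZ3) :
  (forall m : 'X_{1..3}, (m iz <= 1)%N -> P@_m = (Gz 1 2)@_m) ->
  forall i : int, in_Delta 1 2 i 1 ->
    coefA 2 P i 1 ^+ 2 > coefA 2 P (i - 1) 1 * coefA 2 P (i + 1) 1.
Proof.
move=> hw [I|I]; last by rewrite /in_Delta; lia.
rewrite in_Delta_nat // => hD; have -> : I = 1%N by lia.
have -> : coefA 2 P 1 1 = 2%:R by rewrite coefA_nat /= hw ?mk3E2 // mcoeff_Gz_w0.
by rewrite PoszP1 (coefA_nat _ _ 2 1) /= mulr0.
Qed.

Lemma coprime_ltn a b : (a <= b)%N -> coprime a b -> (1 < b)%N -> (a < b)%N.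
Proof.
rewrite leq_eqVlt => /orP[/eqP -> | //].
by rewrite /coprime gcdnn => /eqP ->.
Qed.

Unset Implicit Arguments.
Theorem theorem6p6 (M : nat -> nat -> RF) (a b : nat) (P : mpZ3) :
  is_markov_family M ->
  (1 <= a)%N -> (a <= b)%N -> coprime a b ->
  P \is (a + b - 1)%N.-homog ->
  M a b = sq_subst P / (xF ^+ (a - 1) * yF ^+ (b - 1) * zF ^+ (a + b - 1)) ->
  (forall i : int, in_Delta a b i 1 ->
     coefA (a + b - 1) P i 1 ^+ 2
       > coefA (a + b - 1) P (i - 1) 1 * coefA (a + b - 1) P (i + 1) 1) /\
  (forall i j : int, in_Delta a b i j -> i + j = (a + b)%:Z - 2 ->
     coefA (a + b - 1) P i j ^+ 2
       > coefA (a + b - 1) P (i - 1) (j + 1) * coefA (a + b - 1) P (i + 1) (j - 1)).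
Proof.
move=> hM ha hab cop _ hP.
have inab : in_index a b by rewrite /in_index cop hab.
have [_ _ hz _ hy] := markov_expansions_all hM inab.
have [hb1|hb2] := ltnP b 2.
  have a1 : a = 1%N by lia.
  have b1 : b = 1%N by lia.
  subst a b; split; first exact: logconcave_row1_11 (mcoeff_P11_v hM hP).
  move=> [I|I] [J|J] hD hij; try by move: hD; rewrite /in_Delta; lia.
  by move: hD hij; rewrite in_Delta_nat //; lia.
have hw := mcoeff_P_low_w ha hb2 hP (hz ha (ltnW hb2)).
split; last exact: logconcave_antidiagonal ha hb2 hw.
have hab' := coprime_ltn hab cop hb2.
have [hb3|hb3] := ltnP b 3.
  have a1 : a = 1%N by lia.
  have b2 : b = 2%N by lia.
  by subst a b; exact: logconcave_row1_12.
exact: logconcave_row1 ha hab' hb3 (mcoeff_P_low_v ha hb3 hP (hy hb2)).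
Qed.
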